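(* Let $(M,F)$ be a locally Minkowski space and fix a chart in which $g_{ij}=g_{ij}(y)$. Let $c(s)=(x^i(s))$ be a unit speed curve, $y^i=\dot x^i$, $\tau^i=\frac{dy^i}{ds}$, and $\frac{D\tau^i}{ds}:=\frac{d\tau^i}{ds}+C^i_{\ hk}(y)\tau^h\tau^k$. Then $c$ is biharmonic if and only if there exist constants $\lambda_1,\dots,\lambda_n$ such that $$g_{ij}(y(s))\,\frac{D\tau^j}{ds}=\lambda_i\qquad\text{for all }s,\ i=1,\dots,n.$$
   Context: A Finsler structure on $M$ is $F:TM\to\mathbb R$, smooth for $y\neq0$, continuous at $y=0$, positively 1-homogeneous in $y$, with metric tensor $g_{ij}(x,y)=\tfrac12\partial^2F^2/\partial y^i\partial y^j$ positive definite. $(M,F)$ is locally Minkowski if around every point there is a chart in which $g_{ij}$ depends only on $y$; in such a chart the adapted frame is $\delta_i=\partial/\partial x^i$, $\dot\partial_i=\partial/\partial y^i$, and the Cartan connection $D$ has $D_{\delta_k}\delta_j=0$, $D_{\delta_k}\dot\partial_j=0$, $D_{\dot\partial_k}\delta_j=C^i_{jk}\delta_i$, $D_{\dot\partial_k}\dot\partial_j=C^i_{jk}\dot\partial_i$, with $C^i_{jk}=\tfrac12g^{ih}\partial g_{hj}/\partial y^k$. For a unit speed curve $c$ ($F(x,\dot x)=1$) with lift $c'=(x,\dot x)$, $T=\dot x^i\delta_i$; $D_{\partial_s}$ is the covariant derivative along $c'$ induced by $D$ with reference vector $y=\dot x$ (so $D_{\partial_s}T=\tau^i\delta_i$ with $\tau^i=d\dot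 x^i/ds$); $\langle X,Y\rangle=g_{ij}X^iY^j$. The bienergy is $E_2(c)=\tfrac12\int_c\langle D_{\partial_s}T,D_{\partial_s}T\rangle ds$, and $c$ is biharmonic if it is a critical point of $E_2$ under smooth variations with fixed endpoints. *)

From Stdlib Require Import Reals Lra Lia Classical ClassicalEpsilon.
Open Scope R_scope.

(* Vectors of R^n are represented as nat -> R; only coordinates i < n matter. *)

Fixpoint rsum (n : nat) (f : nat -> R) : R :=
  match n with O => 0 | S m => rsum m f + f m end.

Definition kdelta (i j : nat) : R := if Nat.eqb i j then 1 else 0.

Definition upd (y : nat -> R) (i : nat) (t : R) : nat -> R :=
  fun k => if Nat.eqb k i then t else y k.

(* the derivative of a real function at t (meaningful when it exists) *)
Definition deriv (f : R -> R) (t : R) : R :=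
  epsilon (inhabits 0) (fun l => derivable_pt_lim f t l).

Definition pderiv (f : (nat -> R) -> R) (i : nat) (y : nat -> R) : R :=
  deriv (fun t => f (upd y i t)) (y i).

Definition nonzero (n : nat) (y : nat -> R) : Prop :=
  exists i, (i < n)%nat /\ y i <> 0.

Definition zerov (n : nat) (y : nat -> R) : Prop :=
  forall i, (i < n)%nat -> y i = 0.

Definition cont_on (n : nat) (D : (nat -> R) -> Prop) (f : (nat -> R) -> R) : Prop :=
  forall y, D y -> forall eps, 0 < eps -> exists delta, 0 < delta /\
    forall z, (forall i, (i < n)%nat -> Rabs (z i - y i) < delta) ->
      Rabs (f z - f y) < eps.

Fixpoint Ck (n k : nat) (D : (nat -> R) -> Prop) (f : (nat -> R) -> R) : Prop :=
  match k with
  | O => cont_on n D f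
  | S k' => cont_on n D f /\
      forall i, (i < n)%nat ->
        (forall y, D y -> exists l, derivable_pt_lim (fun t => f (upd y i t)) (y i) l) /\
        Ck n k' D (pderiv f i)
  end.

Definition smooth_on (n : nat) (D : (nat -> R) -> Prop) (f : (nat -> R) -> R) : Prop :=
  forall k, Ck n k D f.

Definition gten (n : nat) (F : (nat -> R) -> R) (i j : nat) (y : nat -> R) : R :=
  pderiv (pderiv (fun z => (F z) ^ 2 / 2) i) j y.

(* a Minkowski norm on R^n (Finsler structure of a chart where g = g(y)) *)
Definition Minkowski (n : nat) (F : (nat -> R) -> R) : Prop :=
  (forall u v, (forall i, (i < n)%nat -> u i = v i) -> F u = F v) /\
  smooth_on n (nonzero n) F /\
  cont_on n (zerov n) F /\
  (forall lam y, 0 < lam -> F (fun i => lam * y i) = lam * F y) /\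
  (forall y, nonzero n y -> forall v, nonzero n v ->
     0 < rsum n (fun i => rsum n (fun j => gten n F i j y * v i * v j))).

Definition ginv (n : nat) (F : (nat -> R) -> R) (i j : nat) (y : nat -> R) : R :=
  epsilon (inhabits (fun _ _ : nat => 0))
    (fun m : nat -> nat -> R => forall p q, (p < n)%nat -> (q < n)%nat ->
       rsum n (fun h => m p h * gten n F h q y) = kdelta p q) i j.

Definition Cart (n : nat) (F : (nat -> R) -> R) (i j k : nat) (y : nat -> R) : R :=
  / 2 * rsum n (fun h => ginv n F i h y * pderiv (gten n F h j) k y).

Definition smooth1 (f : R -> R) : Prop :=
  exists D : nat -> R -> R, D O = f /\
    forall k t, derivable_pt_lim (D k) t (D (S k) t).

Definition smooth_curve (n : nat) (x : R -> nat -> R) : Prop :=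
  forall i, (i < n)%nat -> smooth1 (fun s => x s i).

(* y^i = dx^i/ds, tau^i = dy^i/ds, dtau^i/ds *)
Definition vel (x : R -> nat -> R) (s : R) : nat -> R :=
  fun i => deriv (fun u => x u i) s.
Definition acc (x : R -> nat -> R) (s : R) : nat -> R :=
  fun i => deriv (fun u => vel x u i) s.
Definition jerk (x : R -> nat -> R) (s : R) : nat -> R :=
  fun i => deriv (fun u => acc x u i) s.

Definition unit_speed (n : nat) (F : (nat -> R) -> R) (a b : R) (x : R -> nat -> R) : Prop :=
  forall s, a <= s <= b -> F (vel x s) = 1.

(* Riemann integral on [a,b] (0 if not integrable) *)
Definition Rint (f : R -> R) (a b : R) : R :=
  epsilon (inhabits 0)
    (fun I => exists pr : Riemann_integrable f a b, RiemannInt pr = I).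

Definition E2 (n : nat) (F : (nat -> R) -> R) (a b : R) (x : R -> nat -> R) : R :=
  / 2 * Rint (fun s => rsum n (fun i => rsum n (fun j =>
          gten n F i j (vel x s) * acc x s i * acc x s j))) a b.

Definition biharmonic (n : nat) (F : (nat -> R) -> R) (a b : R) (x : R -> nat -> R) : Prop :=
  forall V : R -> nat -> R, smooth_curve n V ->
    (forall i, (i < n)%nat -> V a i = 0 /\ V b i = 0 /\
        deriv (fun s => V s i) a = 0 /\ deriv (fun s => V s i) b = 0) ->
    derivable_pt_lim (fun t => E2 n F a b (fun s i => x s i + t * V s i)) 0 0.

Definition Dtau (n : nat) (F : (nat -> R) -> R) (x : R -> nat -> R) (s : R) (i : nat) : R :=
  jerk x s i + rsum n (fun h => rsum n (fun k =>
     Cart n F i h k (vel x s) * acc x s h * acc x s k)).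

(** Along a variation [x + t V] whose [V] and [V'] vanish at the ends,
    differentiating the bienergy under the integral sign and integrating by
    parts once gives
      [dE_2/dt (0) = - \int_a^b g_ij(y) (D tau^j / ds) V'^i ds];
    the Cartan term appears because [dg_ij/dy^k] is totally symmetric
    (Schwarz's theorem for [F^2/2]).  If [g_ij D tau^j = lam_i] is constant the
    right-hand side is [- lam_i (V^i(b) - V^i(a)) = 0].  Conversely, taking
    [V = sigma e_i] with [sigma'] the difference of two narrow bumps centred at
    [s1] and [s2] shows that the continuous function [g_ij D tau^j] takes the
    same value at [s1] and [s2] (du Bois-Reymond lemma). *)

From Pilot Require Import Defs.
From Stdlib Require Import Reals Lra Lia Classical ClassicalEpsilon FunctionalExtensionality PropExtensionality.
From mathcomp Require all_boot all_algebra Rstruct.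
From Coquelicot Require Import Coquelicot.
Open Scope R_scope.

Module PosDefInverse.
Import all_boot all_algebra Rstruct GRing.Theory.
Local Open Scope ring_scope.

Lemma rsum_bigE n (f : nat -> R) : rsum n f = \sum_(i < n) f i.
Proof.
elim: n => [|n IH]; first by rewrite big_ord0.
by rewrite big_ord_recr /= IH.
Qed.

Section PosDef.
Variables (n : nat) (G : nat -> nat -> R).
Hypothesis Hpos : forall v, (exists i, (i < n)%coq_nat /\ v i <> 0) ->
  Rlt 0 (rsum n (fun i => rsum n (fun j => G i j * v i * v j))).

Let A : 'M[R]_n := \matrix_(i < n, j < n) G i j.

Lemma posdef_unitmx : A \in unitmx.
Proof.
rewrite -row_free_unit -kermx_eq0; apply/negPn/negP => Hk.
have [i Hi] : exists i, row i (kermx A) != 0.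
  apply/existsP; apply: contraR Hk => /existsPn H.
  apply/eqP/row_matrixP => i; rewrite row0; exact/eqP/negPn/(H i).
set u := row i (kermx A).
have Hu : u *m A = 0 by rewrite /u -row_mul mulmx_ker row0.
pose v := fun k : nat => if (k < n)%N =P true is ReflectT Hk2 then u 0 (Ordinal Hk2) else 0.
have Hv : forall k : 'I_n, v k = u 0 k.
  move=> k; rewrite /v; case: eqP => [Hk'|]; last by rewrite ltn_ord.
  by congr (u _ _); apply: val_inj.
have : Rlt 0 (rsum n (fun i0 => rsum n (fun j => G i0 j * v i0 * v j))).
  apply: Hpos.
  have [k Hk3] : exists k, u 0 k != 0.
    apply/existsP; apply: contraR Hi => /existsPn H.
    apply/eqP/rowP => k; rewrite [RHS]mxE; have := H k; rewrite negbK => /eqP; done.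
  exists k; split; first by apply/ltP; exact: ltn_ord.
  by rewrite Hv; apply/eqP; exact: Hk3.
have -> : rsum n (fun i0 => rsum n (fun j => G i0 j * v i0 * v j)) = 0.
  rewrite rsum_bigE.
  under eq_bigr => k _ do rewrite rsum_bigE.
  rewrite exchange_big /=.
  transitivity (\sum_(j < n) (u *m A) 0 j * v j).
    apply: eq_bigr => j _; rewrite [(u *m A) 0 j]mxE big_distrl /=; apply: eq_bigr => k _.
    by rewrite [A k j]mxE Hv; congr (_ * _); exact: mulrC.
  by rewrite Hu; apply: big1 => j _; rewrite mxE mul0r.
by move/Rlt_irrefl.
Qed.

Lemma posdef_left_inverse : exists m : nat -> nat -> R, forall p q, (p < n)%coq_nat -> (q < n)%coq_nat ->
  rsum n (fun h => m p h * G h q) = kdelta p q.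
Proof.
pose M := invmx A.
exists (fun p q => if (p < n)%N =P true is ReflectT Hp then
                    if (q < n)%N =P true is ReflectT Hq then M (Ordinal Hp) (Ordinal Hq) else 0 else 0).
move=> p q /ltP Hp /ltP Hq.
have := mulVmx posdef_unitmx => /matrixP /(_ (Ordinal Hp) (Ordinal Hq)).
rewrite !mxE => H.
have -> : kdelta p q = ((Ordinal Hp == Ordinal Hq)%:R : R).
  rewrite /kdelta; case: (PeanoNat.Nat.eqb_spec p q) => [e|e].
  - by subst; rewrite (_ : Ordinal Hp = Ordinal Hq) ?eqxx //; apply: val_inj.
  - by rewrite (_ : (Ordinal Hp == Ordinal Hq) = false) //; apply/negbTE/eqP => -[].
rewrite -H rsum_bigE.
apply: eq_bigr => h _; rewrite !mxE.
case: eqP => [Hp'|]; last by rewrite Hp.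
case: eqP => [Hh'|]; last by rewrite ltn_ord.
rewrite (eq_irrelevance Hp' Hp).
by congr (M _ _ * _); apply: val_inj.
Qed.

End PosDef.

End PosDefInverse.

(* Coquelicot also exports a [nonzero]. *)
Local Notation nonzero := Defs.nonzero.

(** * Finite sums and matrices *)

Lemma rsum_ext n f g : (forall i, (i < n)%nat -> f i = g i) -> rsum n f = rsum n g.
Proof. induction n; simpl; intros H; auto. rewrite IHn, H; auto. Qed.

Lemma rsum_plus n f g : rsum n (fun i => f i + g i) = rsum n f + rsum n g.
Proof. induction n; simpl; [ring | rewrite IHn; ring]. Qed.

Lemma rsum_minus n f g : rsum n (fun i => f i - g i) = rsum n f - rsum n g.
Proof. induction n; simpl; [ring | rewrite IHn; ring]. Qed.

Lemma rsum_scal_l n c f : rsum n (fun i => c * f i) = c * rsum n f.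
Proof. induction n; simpl; [ring | rewrite IHn; ring]. Qed.

Lemma rsum_scal_r n c f : rsum n (fun i => f i * c) = rsum n f * c.
Proof. induction n; simpl; [ring | rewrite IHn; ring]. Qed.

Lemma rsum_0 n : rsum n (fun _ => 0) = 0.
Proof. induction n; simpl; [ring | rewrite IHn; ring]. Qed.

Lemma rsum_swap n m (f : nat -> nat -> R) :
  rsum n (fun i => rsum m (fun j => f i j)) = rsum m (fun j => rsum n (fun i => f i j)).
Proof.
  induction n; simpl.
  - rewrite rsum_0; auto.
  - rewrite IHn, <- rsum_plus. auto.
Qed.

Lemma rsum_nonneg n (f : nat -> R) : (forall i, (i < n)%nat -> 0 <= f i) -> 0 <= rsum n f.
Proof.
  induction n; simpl; intros H; [lra |].
  pose proof (H n ltac:(lia)). pose proof (IHn ltac:(intros; apply H; lia)). lra.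
Qed.

Lemma rsum_sqr_pos n (v : nat -> R) :
  (exists i, (i < n)%nat /\ v i <> 0) -> 0 < rsum n (fun k => v k * v k).
Proof.
  induction n; intros [i [Hi Hv]]; [lia |]. simpl.
  pose proof (Rle_0_sqr (v n)). unfold Rsqr in *.
  destruct (Nat.eq_dec i n).
  - subst. assert (0 < v n * v n) by (apply Rsqr_pos_lt; auto).
    pose proof (rsum_nonneg n (fun k => v k * v k) ltac:(intros; apply Rle_0_sqr)). lra.
  - assert (0 < rsum n (fun k => v k * v k)) by (apply IHn; exists i; split; auto; lia). lra.
Qed.

Lemma rsum_indicator n k c (f : nat -> R) : (k < n)%nat ->
  rsum n (fun i => (if Nat.eqb i k then c else 0) * f i) = c * f k.
Proof.
  induction n; intros Hk; [lia |]. simpl.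
  destruct (Nat.eq_dec k n).
  - subst. rewrite Nat.eqb_refl, (rsum_ext _ _ (fun _ => 0)), rsum_0; [ring |].
    intros i Hi. destruct (Nat.eqb_spec i n); [lia | ring].
  - rewrite IHn by lia. destruct (Nat.eqb_spec n k); [lia | ring].
Qed.

Lemma kdelta_sym i j : kdelta i j = kdelta j i.
Proof. unfold kdelta. destruct (Nat.eqb_spec i j), (Nat.eqb_spec j i); auto; lia. Qed.

Lemma rsum_kdelta_l n k (f : nat -> R) : (k < n)%nat ->
  rsum n (fun i => kdelta k i * f i) = f k.
Proof.
  intros Hk. rewrite <- (Rmult_1_l (f k)), <- (rsum_indicator n k 1 f Hk). apply rsum_ext.
  intros i _. unfold kdelta. rewrite Nat.eqb_sym. reflexivity.
Qed.

Lemma rsum_kdelta_r n k (f : nat -> R) : (k < n)%nat ->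
  rsum n (fun i => f i * kdelta i k) = f k.
Proof.
  intros Hk. rewrite <- (rsum_kdelta_l n k f Hk). apply rsum_ext.
  intros. rewrite kdelta_sym. ring.
Qed.

Lemma left_inverse_sym_right n (G M : nat -> nat -> R) :
  (forall a b, (a < n)%nat -> (b < n)%nat -> G a b = G b a) ->
  (forall p q, (p < n)%nat -> (q < n)%nat -> rsum n (fun h => M p h * G h q) = kdelta p q) ->
  forall k q, (k < n)%nat -> (q < n)%nat -> rsum n (fun j => G k j * M j q) = kdelta k q.
Proof.
  intros HG HM.
  assert (Msym : forall a b, (a < n)%nat -> (b < n)%nat -> M a b = M b a).
  { intros a b Ha Hb.
    transitivity (rsum n (fun c => M a c * rsum n (fun d => M b d * G d c))).
    { rewrite <- (rsum_kdelta_r n b (M a)) by auto.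
      apply rsum_ext; intros c Hc. rewrite kdelta_sym, HM; auto. }
    transitivity (rsum n (fun d => M b d * rsum n (fun c => M a c * G c d))).
    { transitivity (rsum n (fun c => rsum n (fun d => M a c * (M b d * G d c)))).
      { apply rsum_ext; intros c Hc. rewrite <- rsum_scal_l. auto. }
      rewrite rsum_swap. apply rsum_ext; intros d Hd.
      rewrite <- rsum_scal_l. apply rsum_ext; intros c Hc. rewrite (HG d c) by auto. ring. }
    rewrite <- (rsum_kdelta_l n a (M b)) by auto.
    apply rsum_ext; intros d Hd. rewrite HM; auto. ring. }
  intros k q Hk Hq.
  transitivity (rsum n (fun j => M q j * G j k)).
  { apply rsum_ext; intros j Hj. rewrite HG, Msym; auto. ring. }
  rewrite HM; auto. apply kdelta_sym.
Qed.

(** * Real functions of one variable *)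

Lemma deriv_lim f t l : derivable_pt_lim f t l -> deriv f t = l.
Proof.
  intros H. unfold deriv.
  pose proof (epsilon_spec (inhabits 0) (fun l => derivable_pt_lim f t l) (ex_intro _ l H)).
  eapply uniqueness_limite; eauto.
Qed.

Lemma derivable_pt_lim_loc f g t l :
  (exists d, 0 < d /\ forall u, Rabs (u - t) < d -> f u = g u) ->
  derivable_pt_lim f t l -> derivable_pt_lim g t l.
Proof.
  intros [d [Hd Hfg]] H eps Heps.
  destruct (H eps Heps) as [d' Hd'].
  assert (Hm : 0 < Rmin d d') by (apply Rmin_pos; [lra | apply (cond_pos d')]).
  exists (mkposreal _ Hm). intros h Hh0 Hh. simpl in Hh.
  rewrite <- !Hfg.
  - apply Hd'; auto. apply Rlt_le_trans with (1 := Hh). apply Rmin_r.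
  - unfold Rminus; rewrite Rplus_opp_r, Rabs_R0; lra.
  - replace (t + h - t) with h by ring. apply Rlt_le_trans with (1 := Hh). apply Rmin_l.
Qed.

Lemma derivable_pt_lim_ext f g t l :
  (forall u, f u = g u) -> derivable_pt_lim f t l -> derivable_pt_lim g t l.
Proof. intros H. apply derivable_pt_lim_loc. exists 1; split; [lra | auto]. Qed.

Lemma derivable_pt_lim_eq f t l l' : derivable_pt_lim f t l -> l = l' -> derivable_pt_lim f t l'.
Proof. intros H <-; exact H. Qed.

Lemma deriv_loc f g t : (exists d, 0 < d /\ forall u, Rabs (u - t) < d -> f u = g u) ->
  deriv f t = deriv g t.
Proof.
  intros Hl. unfold deriv. f_equal. apply functional_extensionality. intro l.
  apply propositional_extensionality. split; apply derivable_pt_lim_loc; auto.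
  destruct Hl as [d [Hd H]]. exists d; split; auto. intros; symmetry; auto.
Qed.

Lemma derivable_pt_lim_affine c d t : derivable_pt_lim (fun u => c * u + d) t c.
Proof.
  apply (derivable_pt_lim_eq _ _ (c * 1 + 0)); [| ring].
  apply (derivable_pt_lim_plus (fun u => c * u) (fun _ => d)).
  - apply (derivable_pt_lim_scal (fun u => u)), derivable_pt_lim_id.
  - apply derivable_pt_lim_const.
Qed.

Lemma derivable_pt_lim_rsum n (f : nat -> R -> R) (l : nat -> R) t :
  (forall i, (i < n)%nat -> derivable_pt_lim (f i) t (l i)) ->
  derivable_pt_lim (fun s => rsum n (fun i => f i s)) t (rsum n l).
Proof.
  induction n; intros H; simpl.
  - apply derivable_pt_lim_const.
  - apply (derivable_pt_lim_plus (fun s => rsum n (fun i => f i s)) (f n)); auto.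
Qed.

Lemma derivable_pt_lim_continuity_pt f x l : derivable_pt_lim f x l -> continuity_pt f x.
Proof. intros H. apply derivable_continuous_pt. exists l; auto. Qed.

Lemma continuity_pt_eps f x : continuity_pt f x ->
  forall eps, 0 < eps -> exists d, 0 < d /\ forall y, Rabs (y - x) < d -> Rabs (f y - f x) < eps.
Proof.
  intros H eps Heps. destruct (H eps Heps) as [d [Hd H2]].
  exists d; split; auto. intros y Hy.
  destruct (Req_dec y x) as [-> | Hne].
  - unfold Rminus; rewrite Rplus_opp_r, Rabs_R0; auto.
  - apply (H2 y). split; [split; auto; exact I | auto].
Qed.

Lemma eps_continuity_pt f x :
  (forall eps, 0 < eps -> exists d, 0 < d /\ forall y, Rabs (y - x) < d -> Rabs (f y - f x) < eps) ->
  continuity_pt f x.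
Proof.
  intros H eps Heps. destruct (H eps Heps) as [d [Hd H2]].
  exists d; split; auto. intros y [_ Hy]. apply H2. auto.
Qed.

Lemma Rabs_le_all_eps_0 x : (forall eps, 0 < eps -> Rabs x <= eps) -> x = 0.
Proof.
  intros H. destruct (Req_dec x 0) as [| Hne]; auto.
  exfalso. pose proof (Rabs_pos_lt x Hne). specialize (H (Rabs x / 2) ltac:(lra)). lra.
Qed.

Lemma continuity_pt_adherent_eq f x c : continuity_pt f x ->
  (forall d, 0 < d -> exists y, Rabs (y - x) < d /\ f y = c) -> f x = c.
Proof.
  intros Hf Hnear. apply Rminus_diag_uniq, Rabs_le_all_eps_0. intros eps Heps.
  destruct (continuity_pt_eps f x Hf eps Heps) as [d [Hd Hfd]].
  destruct (Hnear d Hd) as [y [Hy <-]]. rewrite Rabs_minus_sym. left. apply Hfd. auto.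
Qed.

Lemma continuity_pt_rsum n (f : nat -> R -> R) s :
  (forall i, (i < n)%nat -> continuity_pt (f i) s) ->
  continuity_pt (fun v => rsum n (fun i => f i v)) s.
Proof.
  induction n; intros H; simpl.
  - apply continuity_pt_const. intros x y; auto.
  - apply (continuity_pt_plus (fun v => rsum n (fun i => f i v)) (f n)); auto.
Qed.

Lemma Rmult_close a b eps : 0 < eps -> exists e, 0 < e /\
  forall a' b', Rabs (a' - a) < e -> Rabs (b' - b) < e -> Rabs (a' * b' - a * b) < eps.
Proof.
  intros Heps.
  set (K := 1 + Rabs a + Rabs b).
  assert (HK : 0 < K) by (unfold K; pose proof (Rabs_pos a); pose proof (Rabs_pos b); lra).
  set (e := Rmin 1 (eps / (2 * K))).
  assert (He : 0 < e) by (apply Rmin_pos; [lra | apply Rdiv_lt_0_compat; lra]).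
  assert (He1 : e <= 1) by apply Rmin_l.
  assert (HeK : e * K <= eps / 2).
  { replace (eps / 2) with (eps / (2 * K) * K) by (field; lra).
    apply Rmult_le_compat_r; [lra | apply Rmin_r]. }
  exists e. split; auto. intros a' b' H1 H2.
  replace (a' * b' - a * b) with ((a' - a) * (b' - b) + (a' - a) * b + a * (b' - b)) by ring.
  eapply Rle_lt_trans; [apply Rabs_triang |].
  eapply Rle_lt_trans; [apply Rplus_le_compat_r; apply Rabs_triang |].
  rewrite !Rabs_mult.
  assert (Rabs (a' - a) * Rabs (b' - b) <= e * e) by (apply Rmult_le_compat; try apply Rabs_pos; lra).
  assert (Rabs (a' - a) * Rabs b <= e * Rabs b) by (apply Rmult_le_compat_r; [apply Rabs_pos | lra]).
  assert (Rabs a * Rabs (b' - b) <= Rabs a * e) by (apply Rmult_le_compat_l; [apply Rabs_pos | lra]).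
  assert (e * e <= e) by nra.
  unfold K in HeK. lra.
Qed.

Lemma Rint_RInt f a b : ex_RInt f a b -> Rint f a b = RInt f a b.
Proof.
  intros H. pose proof (ex_RInt_Reals_0 f a b H) as pr.
  rewrite (RInt_Reals f a b pr). unfold Rint.
  assert (Hex : exists I, exists pr : Riemann_integrable f a b, RiemannInt pr = I)
    by (exists (RiemannInt pr); exists pr; auto).
  destruct (epsilon_spec (inhabits 0) _ Hex) as [pr2 Hpr2].
  rewrite <- Hpr2. apply RiemannInt_P5.
Qed.

(* Specialisations to real-valued integrands, whose conclusions [ring] and [lra] can use. *)
Lemma RInt_ext_R (f g : R -> R) a b :
  (forall x, Rmin a b < x < Rmax a b -> f x = g x) -> RInt f a b = RInt g a b.
Proof. apply RInt_ext. Qed.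

Lemma RInt_minus_R (f g : R -> R) a b : ex_RInt f a b -> ex_RInt g a b ->
  RInt (fun s => f s - g s) a b = RInt f a b - RInt g a b.
Proof. intros Hf Hg. exact (RInt_minus f g a b Hf Hg). Qed.

Lemma RInt_scal_R (f : R -> R) a b c : ex_RInt f a b -> RInt (fun s => c * f s) a b = c * RInt f a b.
Proof. intros Hf. exact (RInt_scal f a b c Hf). Qed.

Lemma ex_RInt_scal_R (f : R -> R) a b c : ex_RInt f a b -> ex_RInt (fun s => c * f s) a b.
Proof. intros Hf. exact (ex_RInt_scal f a b c Hf). Qed.

Lemma ex_RInt_continuity_pt (f : R -> R) a b :
  a <= b -> (forall s, a <= s <= b -> continuity_pt f s) -> ex_RInt f a b.
Proof.
  intros Hab H. apply (ex_RInt_continuous (V := R_CompleteNormedModule)).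
  rewrite Rmin_left, Rmax_right by lra. intros z Hz. apply continuity_pt_filterlim. auto.
Qed.

Lemma RInt_derivable_pt_lim (f df : R -> R) a b : a <= b ->
  (forall s, a <= s <= b -> derivable_pt_lim f s (df s)) ->
  (forall s, a <= s <= b -> continuity_pt df s) ->
  RInt df a b = f b - f a.
Proof.
  intros Hab Hd Hc. apply is_RInt_unique.
  apply (is_RInt_derive (V := R_CompleteNormedModule)); rewrite Rmin_left, Rmax_right by lra.
  - intros z Hz. apply is_derive_Reals, Hd. auto.
  - intros z Hz. apply continuity_pt_filterlim, Hc. auto.
Qed.

(** * Partial derivatives and the classes C^k on nonzero vectors *)

Definition depends_on_first (n : nat) (f : (nat -> R) -> R) : Prop :=
  forall u v, (forall i, (i < n)%nat -> u i = v i) -> f u = f v.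

Lemma upd_same y i t : upd y i t i = t.
Proof. unfold upd. rewrite Nat.eqb_refl. auto. Qed.

Lemma upd_other y i j t : j <> i -> upd y i t j = y j.
Proof. intros. unfold upd. destruct (Nat.eqb_spec j i); auto; lia. Qed.

Lemma upd_upd y i t s : upd (upd y i t) i s = upd y i s.
Proof. apply functional_extensionality; intro k. unfold upd. destruct (Nat.eqb k i); auto. Qed.

Lemma upd_id y i : upd y i (y i) = y.
Proof.
  apply functional_extensionality; intro k. unfold upd.
  destruct (Nat.eqb_spec k i); subst; auto.
Qed.

Lemma upd_comm y i j t s : i <> j -> upd (upd y i t) j s = upd (upd y j s) i t.
Proof.
  intros. apply functional_extensionality; intro k. unfold upd.
  destruct (Nat.eqb_spec k j), (Nat.eqb_spec k i); subst; auto; lia.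
Qed.

Lemma depends_on_first_pderiv n f i :
  (i < n)%nat -> depends_on_first n f -> depends_on_first n (pderiv f i).
Proof.
  intros Hi Hf u v Huv. unfold pderiv. rewrite (Huv i Hi).
  f_equal. apply functional_extensionality; intro t. apply Hf.
  intros k Hk. unfold upd. destruct (Nat.eqb k i); auto.
Qed.

Lemma pderiv_lim f i y l : derivable_pt_lim (fun t => f (upd y i t)) (y i) l -> pderiv f i y = l.
Proof. apply deriv_lim. Qed.

Lemma pderiv_const c i : pderiv (fun _ => c) i = fun _ => 0.
Proof.
  apply functional_extensionality; intro y. apply pderiv_lim. apply derivable_pt_lim_const.
Qed.

Lemma common_delta n (P : nat -> R -> Prop) :
  (forall i d d', (i < n)%nat -> 0 < d' <= d -> P i d -> P i d') ->
  (forall i, (i < n)%nat -> exists d, 0 < d /\ P i d) ->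
  exists d, 0 < d /\ forall i, (i < n)%nat -> P i d.
Proof.
  induction n; intros Hm Hex.
  - exists 1; split; [lra | intros; lia].
  - destruct IHn as [d1 [Hd1 H1]].
    + intros; eapply Hm; eauto; lia.
    + intros; apply Hex; lia.
    + destruct (Hex n ltac:(lia)) as [d2 [Hd2 H2]].
      exists (Rmin d1 d2). split; [apply Rmin_pos; auto |].
      intros i Hi. destruct (Nat.eq_dec i n).
      * subst. eapply Hm; eauto. split; [apply Rmin_pos; auto | apply Rmin_r].
      * eapply Hm; [lia | | apply H1; lia]. split; [apply Rmin_pos; auto | apply Rmin_l].
Qed.

Lemma nonzero_open n y : nonzero n y -> exists r, 0 < r /\
  forall z, (forall i, (i < n)%nat -> Rabs (z i - y i) < r) -> nonzero n z.
Proof.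
  intros [i [Hi Hy]]. apply Rabs_pos_lt in Hy. exists (Rabs (y i) / 2). split; [lra |].
  intros z Hz. exists i. split; auto. intro Hz0. specialize (Hz i Hi).
  rewrite Hz0, Rminus_0_l, Rabs_Ropp in Hz. lra.
Qed.

Lemma not_nonzero n (z : nat -> R) : ~ nonzero n z -> forall k, (k < n)%nat -> z k = 0.
Proof. intros H k Hk. apply NNPP. intro Hne. apply H. exists k; auto. Qed.

Lemma nonzero_upd_near n y i : (i < n)%nat -> nonzero n y -> exists d, 0 < d /\
  forall u, Rabs (u - y i) < d -> nonzero n (upd y i u).
Proof.
  intros Hi Hy. destruct (nonzero_open n y Hy) as [r [Hr H]].
  exists r; split; auto. intros u Hu. apply H. intros k Hk. unfold upd.
  destruct (Nat.eqb_spec k i); [subst; auto |].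
  unfold Rminus; rewrite Rplus_opp_r, Rabs_R0; auto.
Qed.

Lemma cont_on_comp {A : Type} n D f y (near : R -> A -> Prop) (z : A -> nat -> R) :
  cont_on n D f -> D y ->
  (forall d d' a, 0 < d' <= d -> near d' a -> near d a) ->
  (forall i, (i < n)%nat -> forall eps, 0 < eps -> exists d, 0 < d /\
      forall a, near d a -> Rabs (z a i - y i) < eps) ->
  forall eps, 0 < eps -> exists d, 0 < d /\ forall a, near d a -> Rabs (f (z a) - f y) < eps.
Proof.
  intros Hf Hy Hmono Hz eps Heps.
  destruct (Hf y Hy eps Heps) as [d1 [Hd1 H1]].
  destruct (common_delta n (fun i d => 0 < d /\ forall a, near d a -> Rabs (z a i - y i) < d1))
    as [d [Hd H]].
  - intros i d d' Hi Hd' [_ Hdd]. split; [lra |]. intros a Ha. apply Hdd. eapply Hmono; eauto.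
  - intros i Hi. destruct (Hz i Hi d1 Hd1) as [d [Hd Hdd]]. exists d; split; auto.
  - exists d. split; auto. intros a Ha. apply H1. intros i Hi. apply (H i Hi). auto.
Qed.

Lemma cont_on_continuity_pt n D G (z : R -> nat -> R) s :
  cont_on n D G -> D (z s) ->
  (forall k, (k < n)%nat -> continuity_pt (fun u => z u k) s) ->
  continuity_pt (fun u => G (z u)) s.
Proof.
  intros HG HD Hz. apply eps_continuity_pt. intros eps Heps.
  apply (cont_on_comp n D G (z s) (fun d u => Rabs (u - s) < d) z HG HD); auto.
  - intros d d' u Hd Hu. lra.
  - intros k Hk e He. apply (continuity_pt_eps _ _ (Hz k Hk) e He).
Qed.

Lemma cont_on_const n D c : cont_on n D (fun _ => c).
Proof.
  intros y Hy eps Heps. exists 1. split; [lra |].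
  intros. unfold Rminus; rewrite Rplus_opp_r, Rabs_R0; auto.
Qed.

Lemma cont_on_plus n D f g :
  cont_on n D f -> cont_on n D g -> cont_on n D (fun z => f z + g z).
Proof.
  intros Hf Hg y Hy eps Heps.
  destruct (Hf y Hy (eps / 2) ltac:(lra)) as [d1 [Hd1 H1]].
  destruct (Hg y Hy (eps / 2) ltac:(lra)) as [d2 [Hd2 H2]].
  exists (Rmin d1 d2). split; [apply Rmin_pos; auto |]. intros z Hz.
  assert (A1 := H1 z ltac:(intros i Hi; eapply Rlt_le_trans; [apply Hz; auto | apply Rmin_l])).
  assert (A2 := H2 z ltac:(intros i Hi; eapply Rlt_le_trans; [apply Hz; auto | apply Rmin_r])).
  replace (f z + g z - (f y + g y)) with ((f z - f y) + (g z - g y)) by ring.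
  eapply Rle_lt_trans; [apply Rabs_triang |]. lra.
Qed.

Lemma cont_on_mult n D f g :
  cont_on n D f -> cont_on n D g -> cont_on n D (fun z => f z * g z).
Proof.
  intros Hf Hg y Hy eps Heps.
  destruct (Rmult_close (f y) (g y) eps Heps) as [e [He Hc]].
  destruct (Hf y Hy e He) as [d1 [Hd1 H1]].
  destruct (Hg y Hy e He) as [d2 [Hd2 H2]].
  exists (Rmin d1 d2). split; [apply Rmin_pos; auto |]. intros z Hz. apply Hc.
  - apply H1; intros i Hi; eapply Rlt_le_trans; [apply Hz; auto | apply Rmin_l].
  - apply H2; intros i Hi; eapply Rlt_le_trans; [apply Hz; auto | apply Rmin_r].
Qed.

Section NonzeroExt.
Variables (n : nat) (f g : (nat -> R) -> R).
Hypothesis Hfg : forall y, nonzero n y -> f y = g y.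

Lemma cont_on_nonzero_ext : cont_on n (nonzero n) f -> cont_on n (nonzero n) g.
Proof.
  intros Hf y Hy eps Heps.
  destruct (Hf y Hy eps Heps) as [d1 [Hd1 H1]].
  destruct (nonzero_open n y Hy) as [r [Hr Hr2]].
  exists (Rmin d1 r). split; [apply Rmin_pos; auto |]. intros z Hz.
  rewrite <- !Hfg; auto.
  - apply H1. intros i Hi. eapply Rlt_le_trans; [apply Hz; auto | apply Rmin_l].
  - apply Hr2. intros i Hi. eapply Rlt_le_trans; [apply Hz; auto | apply Rmin_r].
Qed.

Lemma upd_nonzero_ext i y : (i < n)%nat -> nonzero n y ->
  exists d, 0 < d /\ forall u, Rabs (u - y i) < d -> f (upd y i u) = g (upd y i u).
Proof.
  intros Hi Hy. destruct (nonzero_upd_near n y i Hi Hy) as [d [Hd H]].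
  exists d; split; auto.
Qed.

Lemma pderiv_nonzero_ext i y : (i < n)%nat -> nonzero n y -> pderiv f i y = pderiv g i y.
Proof. intros Hi Hy. apply deriv_loc, upd_nonzero_ext; auto. Qed.

End NonzeroExt.

Lemma Ck_nonzero_ext n k f g : (forall y, nonzero n y -> f y = g y) ->
  Ck n k (nonzero n) f -> Ck n k (nonzero n) g.
Proof.
  revert f g. induction k; simpl; intros f g Hfg Hf.
  - exact (cont_on_nonzero_ext _ _ _ Hfg Hf).
  - destruct Hf as [Hc Hd]. split; [exact (cont_on_nonzero_ext _ _ _ Hfg Hc) |].
    intros i Hi. destruct (Hd i Hi) as [He Hk]. split.
    + intros y Hy. destruct (He y Hy) as [l Hl]. exists l.
      eapply derivable_pt_lim_loc; [apply (upd_nonzero_ext _ _ _ Hfg); auto | exact Hl].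
    + eapply IHk; [| exact Hk]. intros y Hy. apply (pderiv_nonzero_ext _ _ _ Hfg); auto.
Qed.

Lemma Ck_S n k D f : Ck n (S k) D f -> Ck n k D f.
Proof.
  revert f. induction k; simpl; intros f Hf.
  - tauto.
  - destruct Hf as [Hc Hd]. split; auto. intros i Hi. destruct (Hd i Hi) as [He Hk].
    split; auto.
Qed.

Lemma Ck_cont n k D f : Ck n k D f -> cont_on n D f.
Proof. destruct k; simpl; tauto. Qed.

Lemma Ck_pderiv n k D f i : Ck n (S k) D f -> (i < n)%nat -> Ck n k D (pderiv f i).
Proof. intros [_ H] Hi. apply (H i Hi). Qed.

Lemma Ck_derivable_pt_lim n k D f i y : Ck n (S k) D f -> (i < n)%nat -> D y ->
  derivable_pt_lim (fun t => f (upd y i t)) (y i) (pderiv f i y).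
Proof.
  intros [_ H] Hi Hy. destruct (H i Hi) as [He _]. destruct (He y Hy) as [l Hl].
  rewrite (pderiv_lim _ _ _ _ Hl). auto.
Qed.

Lemma Ck_const n k D c : Ck n k D (fun _ => c).
Proof.
  revert c; induction k; simpl; intros c.
  - apply cont_on_const.
  - split; [apply cont_on_const |]. intros i Hi. split.
    + intros; exists 0; apply derivable_pt_lim_const.
    + rewrite pderiv_const. apply IHk.
Qed.

Lemma Ck_plus n k f g : Ck n k (nonzero n) f -> Ck n k (nonzero n) g ->
  Ck n k (nonzero n) (fun z => f z + g z).
Proof.
  revert f g; induction k; simpl; intros f g Hf Hg.
  - apply cont_on_plus; auto.
  - split; [apply cont_on_plus; tauto |]. intros i Hi.
    assert (Hd : forall y, nonzero n y -> derivable_pt_lim (fun t => f (upd y i t) + g (upd y i t))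
       (y i) (pderiv f i y + pderiv g i y)).
    { intros y Hy.
      apply (derivable_pt_lim_plus (fun t => f (upd y i t)) (fun t => g (upd y i t)));
      eapply (Ck_derivable_pt_lim n k); simpl; eauto. }
    split.
    + intros y Hy. eexists. apply Hd; auto.
    + apply (Ck_nonzero_ext n k (fun z => pderiv f i z + pderiv g i z)).
      * intros y Hy. symmetry. apply pderiv_lim, Hd; auto.
      * apply IHk; [apply Hf | apply Hg]; auto.
Qed.

Lemma Ck_mult n k f g : Ck n k (nonzero n) f -> Ck n k (nonzero n) g ->
  Ck n k (nonzero n) (fun z => f z * g z).
Proof.
  revert f g; induction k; simpl; intros f g Hf Hg.
  - apply cont_on_mult; auto.
  - split; [apply cont_on_mult; tauto |]. intros i Hi.
    assert (Hd : forall y, nonzero n y -> derivable_pt_lim (fun t => f (upd y i t) * g (upd y i t))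
       (y i) (pderiv f i y * g y + f y * pderiv g i y)).
    { intros y Hy. rewrite <- (upd_id y i) at 3 4.
      apply (derivable_pt_lim_mult (fun t => f (upd y i t)) (fun t => g (upd y i t)));
      eapply (Ck_derivable_pt_lim n k); simpl; eauto. }
    split.
    + intros y Hy. eexists. apply Hd; auto.
    + apply (Ck_nonzero_ext n k (fun z => pderiv f i z * g z + f z * pderiv g i z)).
      * intros y Hy. symmetry. apply pderiv_lim, Hd; auto.
      * apply Ck_plus; apply IHk.
        -- apply Hf; auto.
        -- apply (Ck_S n k (nonzero n) g); simpl; auto.
        -- apply (Ck_S n k (nonzero n) f); simpl; auto.
        -- apply Hg; auto.
Qed.

(** * Chain rule *)

Lemma Rabs_between a b v : Rmin a b <= v <= Rmax a b -> Rabs (v - a) <= Rabs (b - a).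
Proof.
  intros [H1 H2]. unfold Rmin, Rmax in *.
  destruct (Rle_dec a b); unfold Rabs; repeat destruct Rcase_abs; lra.
Qed.

Lemma pderiv_mvt n f y m u : Ck n 1 (nonzero n) f -> (m < n)%nat ->
  (forall v, Rmin (y m) u <= v <= Rmax (y m) u -> nonzero n (upd y m v)) ->
  exists c, Rmin (y m) u <= c <= Rmax (y m) u /\
    f (upd y m u) - f y = pderiv f m (upd y m c) * (u - y m).
Proof.
  intros Hf Hm Hseg.
  assert (Hder : forall v, Rmin (y m) u <= v <= Rmax (y m) u ->
     derivable_pt_lim (fun w => f (upd y m w)) v (pderiv f m (upd y m v))).
  { intros v Hv.
    pose proof (Ck_derivable_pt_lim n 0 _ f m (upd y m v) Hf Hm (Hseg v Hv)) as H.
    rewrite upd_same in H. eapply derivable_pt_lim_ext; [| exact H].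
    intros w. cbv beta. rewrite upd_upd. auto. }
  destruct (MVT_gen (fun w => f (upd y m w)) (y m) u (fun v => pderiv f m (upd y m v)))
    as [c [Hc Hmvt]].
  - intros v Hv. apply is_derive_Reals, Hder. lra.
  - intros v Hv. eapply derivable_pt_lim_continuity_pt, Hder; auto.
  - exists c. split; auto. rewrite upd_id in Hmvt. exact Hmvt.
Qed.

(* Moves from [p t0] to [p t] one coordinate at a time as [m] runs from [0] to [n]. *)
Definition mix_coords (p : R -> nat -> R) t0 m t : nat -> R :=
  fun k => if Nat.ltb k m then p t k else p t0 k.

Lemma mix_coords_at p t0 m : mix_coords p t0 m t0 = p t0.
Proof.
  apply functional_extensionality; intro k. unfold mix_coords. destruct (Nat.ltb k m); auto.
Qed.

Lemma mix_coords_S p t0 m t : mix_coords p t0 (S m) t = upd (mix_coords p t0 m t) m (p t m).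
Proof.
  apply functional_extensionality; intro k. unfold mix_coords, upd.
  destruct (Nat.eqb_spec k m), (Nat.ltb_spec k (S m)), (Nat.ltb_spec k m); subst; auto; lia.
Qed.

Lemma mix_coords_m p t0 m t : mix_coords p t0 m t m = p t0 m.
Proof. unfold mix_coords. rewrite Nat.ltb_irrefl. reflexivity. Qed.

Lemma mix_coords_upd_close n p t0 m t v eta : 0 < eta ->
  (forall k, (k < n)%nat -> Rabs (p t k - p t0 k) < eta) ->
  Rabs (v - p t0 m) <= Rabs (p t m - p t0 m) ->
  forall k, (k < n)%nat -> Rabs (upd (mix_coords p t0 m t) m v k - p t0 k) < eta.
Proof.
  intros Heta Hp Hv k Hk. unfold upd, mix_coords. destruct (Nat.eqb_spec k m).
  - subst. eapply Rle_lt_trans; [exact Hv | apply Hp; auto].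
  - destruct (Nat.ltb k m); [apply Hp; auto |].
    unfold Rminus; rewrite Rplus_opp_r, Rabs_R0. exact Heta.
Qed.

Lemma chain_rule_step n f p t0 m dpm :
  Ck n 1 (nonzero n) f -> nonzero n (p t0) -> (m < n)%nat ->
  (forall k, (k < n)%nat -> continuity_pt (fun t => p t k) t0) ->
  derivable_pt_lim (fun t => p t m) t0 dpm ->
  derivable_pt_lim (fun t => f (mix_coords p t0 (S m) t) - f (mix_coords p t0 m t)) t0
    (pderiv f m (p t0) * dpm).
Proof.
  intros Hf Hp0 Hm Hcont Hd eps Heps.
  destruct (Rmult_close (pderiv f m (p t0)) dpm eps Heps) as [e [He Hmc]].
  assert (Hcd := Ck_cont n 0 _ _ (Ck_pderiv n 0 _ f m Hf Hm)).
  destruct (Hcd (p t0) Hp0 e He) as [eta1 [Heta1 H1]].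
  destruct (nonzero_open n (p t0) Hp0) as [r0 [Hr0 H0]].
  set (eta := Rmin eta1 r0).
  destruct (common_delta n (fun k d => forall t, Rabs (t - t0) < d -> Rabs (p t k - p t0 k) < eta))
    as [d1 [Hd1 Hnear]].
  { intros k d d' _ Hdd H t Ht. apply H. lra. }
  { intros k Hk. apply (continuity_pt_eps _ _ (Hcont k Hk)), Rmin_pos; auto. }
  destruct (Hd e He) as [d2 Hd2].
  assert (Hdd : 0 < Rmin d1 d2) by (apply Rmin_pos; auto; apply (cond_pos d2)).
  exists (mkposreal _ Hdd). intros h Hh0 Hh. simpl in Hh.
  set (t := t0 + h).
  assert (Htt : Rabs (t - t0) < d1).
  { unfold t. replace (t0 + h - t0) with h by ring. eapply Rlt_le_trans; [exact Hh | apply Rmin_l]. }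
  assert (Hbox : forall v, Rmin (p t0 m) (p t m) <= v <= Rmax (p t0 m) (p t m) ->
             forall k, (k < n)%nat -> Rabs (upd (mix_coords p t0 m t) m v k - p t0 k) < eta).
  { intros v Hv. apply mix_coords_upd_close; [apply Rmin_pos; auto | | apply Rabs_between, Hv].
    intros; apply Hnear; auto. }
  destruct (pderiv_mvt n f (mix_coords p t0 m t) m (p t m) Hf Hm) as [c [Hc Hmvt]];
    rewrite mix_coords_m in *.
  { intros v Hv. apply H0. intros k Hk.
    eapply Rlt_le_trans; [apply Hbox; auto | apply Rmin_r]. }
  rewrite mix_coords_S, !mix_coords_at. fold t.
  replace (f (upd (mix_coords p t0 m t) m (p t m)) - f (mix_coords p t0 m t) - (f (p t0) - f (p t0)))
    with (f (upd (mix_coords p t0 m t) m (p t m)) - f (mix_coords p t0 m t)) by ring.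
  rewrite Hmvt.
  replace (pderiv f m (upd (mix_coords p t0 m t) m c) * (p t m - p t0 m) / h)
    with (pderiv f m (upd (mix_coords p t0 m t) m c) * ((p (t0 + h) m - p t0 m) / h))
    by (unfold t; field; auto).
  apply Hmc.
  - apply H1. intros k Hk. eapply Rlt_le_trans; [apply Hbox; auto | apply Rmin_l].
  - apply Hd2; auto. eapply Rlt_le_trans; [exact Hh | apply Rmin_r].
Qed.

Lemma chain_rule n f p t0 dp :
  Ck n 1 (nonzero n) f -> depends_on_first n f -> nonzero n (p t0) ->
  (forall i, (i < n)%nat -> derivable_pt_lim (fun t => p t i) t0 (dp i)) ->
  derivable_pt_lim (fun t => f (p t)) t0 (rsum n (fun k => pderiv f k (p t0) * dp k)).
Proof.
  intros Hf Hr Hp Hd.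
  assert (Hc : forall k, (k < n)%nat -> continuity_pt (fun t => p t k) t0).
  { intros k Hk; eapply derivable_pt_lim_continuity_pt; eauto. }
  assert (Hm : forall m, (m <= n)%nat -> derivable_pt_lim (fun t => f (mix_coords p t0 m t)) t0
                                           (rsum m (fun k => pderiv f k (p t0) * dp k))).
  { induction m; intros Hmn.
    - eapply derivable_pt_lim_ext; [| apply (derivable_pt_lim_const (f (p t0)))].
      reflexivity.
    - eapply derivable_pt_lim_ext; [| apply (derivable_pt_lim_plus (fun t => f (mix_coords p t0 m t))
          (fun t => f (mix_coords p t0 (S m) t) - f (mix_coords p t0 m t)))].
      + intros u. unfold plus_fct. ring.
      + apply IHm; lia.
      + apply (chain_rule_step n); auto; lia. }
  eapply derivable_pt_lim_ext; [| apply (Hm n (le_n n))].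
  intros u. apply Hr. intros i Hi. unfold mix_coords. destruct (Nat.ltb_spec i n); auto; lia.
Qed.

(** * Symmetry of second partial derivatives *)

Lemma cont_on_continuity_2d_pt n D G (Z : R -> R -> nat -> R) t s :
  cont_on n D G -> D (Z t s) ->
  (forall k, (k < n)%nat -> continuity_2d_pt (fun u v => Z u v k) t s) ->
  continuity_2d_pt (fun u v => G (Z u v)) t s.
Proof.
  intros HG HD HZ eps.
  destruct (cont_on_comp n D G (Z t s)
              (fun d (a : R * R) => Rabs (fst a - t) < d /\ Rabs (snd a - s) < d)
              (fun a => Z (fst a) (snd a)) HG HD) with (eps := pos eps) as [d [Hd H]].
  - intros d d' a Hdd [H1 H2]; split; lra.
  - intros k Hk e He. destruct (HZ k Hk (mkposreal e He)) as [d Hd].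
    exists d. split; [apply cond_pos |]. intros [u v] [H1 H2]. apply (Hd u v H1 H2).
  - apply cond_pos.
  - exists (mkposreal d Hd). intros u v Hu Hv. apply (H (u, v)). simpl; auto.
Qed.

Lemma continuity_2d_pt_snd (g : R -> R) t s :
  continuity_pt g s -> continuity_2d_pt (fun _ v => g v) t s.
Proof.
  intros H. apply (continuity_1d_2d_pt_comp g (fun _ v => v)); auto.
  apply continuity_2d_pt_id2.
Qed.

Lemma continuity_2d_pt_rsum n (f : nat -> R -> R -> R) t s :
  (forall i, (i < n)%nat -> continuity_2d_pt (f i) t s) ->
  continuity_2d_pt (fun u v => rsum n (fun i => f i u v)) t s.
Proof.
  induction n; intros H; simpl.
  - apply continuity_2d_pt_const.
  - apply (continuity_2d_pt_plus (fun u v => rsum n (fun i => f i u v)) (f n)); auto.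
Qed.

Lemma continuity_2d_pt_section f t s :
  continuity_2d_pt f t s -> continuity_pt (fun v => f t v) s.
Proof.
  intros H. apply eps_continuity_pt. intros e He. destruct (H (mkposreal e He)) as [d Hd].
  exists d. split; [apply cond_pos |]. intros y Hy. apply (Hd t y); auto.
  unfold Rminus; rewrite Rplus_opp_r, Rabs_R0; apply cond_pos.
Qed.

Lemma locally_ball x d (P : R -> Prop) :
  0 < d -> (forall u, Rabs (u - x) < d -> P u) -> locally x P.
Proof. intros Hd H. exists (mkposreal d Hd). intros u Hu. apply H. exact Hu. Qed.

Lemma ex_derive_lim f x l : derivable_pt_lim f x l -> ex_derive f x.
Proof. intros H. exists l. apply is_derive_Reals. auto. Qed.

Lemma Derive_lim f x l : derivable_pt_lim f x l -> Derive f x = l.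
Proof. intros H. apply is_derive_unique, is_derive_Reals. auto. Qed.

Section Schwarz.
Variables (n : nat) (f : (nat -> R) -> R) (y : nat -> R) (i j : nat).
Hypotheses (Hf : Ck n 2 (nonzero n) f) (Hy : nonzero n y) (Hi : (i < n)%nat) (Hj : (j < n)%nat).
Hypothesis Hij : i <> j.

Let w u v := upd (upd y i u) j v.

Let w_i u v t : upd (w u v) i t = w t v.
Proof. unfold w. rewrite upd_comm, upd_upd, upd_comm by auto. auto. Qed.
Let w_j u v t : upd (w u v) j t = w u t.
Proof. unfold w. rewrite upd_upd. auto. Qed.
Let w_ii u v : w u v i = u.
Proof. unfold w. rewrite upd_other by auto. apply upd_same. Qed.
Let w_jj u v : w u v j = v.
Proof. unfold w. apply upd_same. Qed.
Let w_y : w (y i) (y j) = y.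
Proof. unfold w. rewrite !upd_id. auto. Qed.

Let w_continuous k u v : continuity_2d_pt (fun u v => w u v k) u v.
Proof.
  unfold w, upd. destruct (Nat.eqb_spec k j); [apply continuity_2d_pt_id2 |].
  destruct (Nat.eqb_spec k i); [apply continuity_2d_pt_id1 | apply continuity_2d_pt_const].
Qed.

Let w_nonzero_near : exists r, 0 < r /\
  forall u v, Rabs (u - y i) < r -> Rabs (v - y j) < r -> nonzero n (w u v).
Proof.
  destruct (nonzero_open n y Hy) as [r [Hr Hbox]]. exists r; split; auto.
  intros u v Hu Hv. apply Hbox. intros k Hk. unfold w, upd.
  destruct (Nat.eqb_spec k j); [subst; auto |].
  destruct (Nat.eqb_spec k i); [subst; auto |].
  unfold Rminus; rewrite Rplus_opp_r, Rabs_R0; auto.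
Qed.

Let Di g u v : Ck n 1 (nonzero n) g -> nonzero n (w u v) ->
  derivable_pt_lim (fun t => g (w t v)) u (pderiv g i (w u v)).
Proof.
  intros Hg Hw. pose proof (Ck_derivable_pt_lim n 0 _ g i (w u v) Hg Hi Hw) as H.
  rewrite w_ii in H. eapply derivable_pt_lim_ext; [| exact H].
  intros t. cbv beta. rewrite w_i. auto.
Qed.

Let Dj g u v : Ck n 1 (nonzero n) g -> nonzero n (w u v) ->
  derivable_pt_lim (fun t => g (w u t)) v (pderiv g j (w u v)).
Proof.
  intros Hg Hw. pose proof (Ck_derivable_pt_lim n 0 _ g j (w u v) Hg Hj Hw) as H.
  rewrite w_jj in H. eapply derivable_pt_lim_ext; [| exact H].
  intros t. cbv beta. rewrite w_j. auto.
Qed.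

Let second_pderiv_continuous k l : (k < n)%nat -> (l < n)%nat ->
  continuity_2d_pt (fun u v => pderiv (pderiv f k) l (w u v)) (y i) (y j).
Proof.
  intros Hk Hl. apply (cont_on_continuity_2d_pt n (nonzero n)).
  - apply (Ck_cont n 0), (Ck_pderiv n 0); auto. apply (Ck_pderiv n 1); auto.
  - rewrite w_y. auto.
  - intros. apply w_continuous.
Qed.

Lemma pderiv_comm_neq : pderiv (pderiv f i) j y = pderiv (pderiv f j) i y.
Proof.
  destruct w_nonzero_near as [r [Hr Hw]].
  assert (Hf1 : Ck n 1 (nonzero n) f) by (apply (Ck_S n 1); auto).
  assert (Hfk : forall k, (k < n)%nat -> Ck n 1 (nonzero n) (pderiv f k))
    by (intros; apply (Ck_pderiv n 1); auto).
  assert (Htri : forall a b c, Rabs (a - b) < r / 2 -> Rabs (c - a) < r / 2 -> Rabs (c - b) < r).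
  { intros a b c H1 H2. replace (c - b) with ((c - a) + (a - b)) by ring.
    eapply Rle_lt_trans; [apply Rabs_triang | lra]. }
  assert (Lj : forall u v, Rabs (u - y i) < r / 2 -> Rabs (v - y j) < r / 2 ->
     locally u (fun z => Derive (fun t => f (w z t)) v = pderiv f j (w z v))).
  { intros u v Hu Hv. apply (locally_ball u (r / 2)); [lra |]. intros z Hz.
    apply Derive_lim, (Dj f _ _ Hf1), Hw; eauto. lra. }
  assert (Li : forall u v, Rabs (u - y i) < r / 2 -> Rabs (v - y j) < r / 2 ->
     locally v (fun z => Derive (fun t => f (w t z)) u = pderiv f i (w u z))).
  { intros u v Hu Hv. apply (locally_ball v (r / 2)); [lra |]. intros z Hz.
    apply Derive_lim, (Di f _ _ Hf1), Hw; eauto. lra. }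
  assert (E1 : forall u v, Rabs (u - y i) < r / 2 -> Rabs (v - y j) < r / 2 ->
     Derive (fun z => Derive (fun t => f (w z t)) v) u = pderiv (pderiv f j) i (w u v)).
  { intros u v Hu Hv. etransitivity; [apply Derive_ext_loc; exact (Lj u v Hu Hv) |].
    apply Derive_lim, (Di _ _ _ (Hfk j Hj)), Hw; lra. }
  assert (E2 : forall u v, Rabs (u - y i) < r / 2 -> Rabs (v - y j) < r / 2 ->
     Derive (fun z => Derive (fun t => f (w t z)) u) v = pderiv (pderiv f i) j (w u v)).
  { intros u v Hu Hv. etransitivity; [apply Derive_ext_loc; exact (Li u v Hu Hv) |].
    apply Derive_lim, (Dj _ _ _ (Hfk i Hi)), Hw; lra. }
  assert (Hy0 : forall k, Rabs (y k - y k) < r / 2)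
    by (intros; unfold Rminus; rewrite Rplus_opp_r, Rabs_R0; lra).
  assert (Hr2 : 0 < r / 2) by lra.
  pose proof (Schwarz (fun u v => f (w u v)) (y i) (y j)) as HS. cbv beta in HS.
  rewrite (E1 _ _ (Hy0 i) (Hy0 j)), (E2 _ _ (Hy0 i) (Hy0 j)), w_y in HS.
  symmetry. apply HS.
  - exists (mkposreal _ Hr2). intros u v Hu Hv. simpl in Hu, Hv. repeat split.
    + eapply ex_derive_lim, (Di f _ _ Hf1), Hw; lra.
    + eapply ex_derive_lim, (Dj f _ _ Hf1), Hw; lra.
    + eapply ex_derive_ext_loc; [apply (filter_imp _ _ (fun t e => eq_sym e) (Lj u v Hu Hv)) |].
      eapply ex_derive_lim, (Di _ _ _ (Hfk j Hj)), Hw; lra.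
    + eapply ex_derive_ext_loc; [apply (filter_imp _ _ (fun t e => eq_sym e) (Li u v Hu Hv)) |].
      eapply ex_derive_lim, (Dj _ _ _ (Hfk i Hi)), Hw; lra.
  - eapply continuity_2d_pt_ext_loc; [| apply (second_pderiv_continuous j i); auto].
    exists (mkposreal _ Hr2). intros u v Hu Hv. symmetry. apply E1; auto.
  - eapply continuity_2d_pt_ext_loc; [| apply (second_pderiv_continuous i j); auto].
    exists (mkposreal _ Hr2). intros u v Hu Hv. symmetry. apply E2; auto.
Qed.

End Schwarz.

Lemma pderiv_comm n f y i j : Ck n 2 (nonzero n) f -> nonzero n y ->
  (i < n)%nat -> (j < n)%nat -> pderiv (pderiv f i) j y = pderiv (pderiv f j) i y.
Proof.
  intros. destruct (Nat.eq_dec i j); [subst; auto |]. apply (pderiv_comm_neq n); auto.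
Qed.

(** * The fundamental tensor of a Minkowski norm *)

Section Minkowski.
Variables (n : nat) (F : (nat -> R) -> R).
Hypothesis HM : Minkowski n F.

Lemma Minkowski_depends_on_first : depends_on_first n F.
Proof. destruct HM as [H _]. exact H. Qed.

Lemma Minkowski_zero : F (fun _ => 0) = 0.
Proof.
  destruct HM as [_ [_ [_ [Hh _]]]].
  pose proof (Hh 2 (fun _ => 0) ltac:(lra)) as H. cbv beta in H.
  replace (fun _ : nat => 2 * 0) with (fun _ : nat => 0) in H
    by (apply functional_extensionality; intros; ring).
  lra.
Qed.

Let half_sq (z : nat -> R) := F z ^ 2 / 2.

Let half_sq_Ck k : Ck n k (nonzero n) half_sq.
Proof.
  apply (Ck_nonzero_ext n k (fun z => F z * F z * / 2)); [intros; unfold half_sq; field |].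
  destruct HM as [_ [HF _]].
  apply Ck_mult; [apply Ck_mult; apply HF | apply Ck_const].
Qed.

Lemma gten_depends_on_first i j : (i < n)%nat -> (j < n)%nat -> depends_on_first n (gten n F i j).
Proof.
  intros. apply depends_on_first_pderiv, depends_on_first_pderiv; auto.
  intros u v Huv. cbv beta. rewrite (Minkowski_depends_on_first u v Huv). auto.
Qed.

Lemma gten_Ck k i j : (i < n)%nat -> (j < n)%nat -> Ck n k (nonzero n) (gten n F i j).
Proof.
  intros. apply (Ck_pderiv n k); auto. apply (Ck_pderiv n (S k) _ half_sq); auto.
Qed.

Lemma gten_sym i j y : (i < n)%nat -> (j < n)%nat -> nonzero n y ->
  gten n F i j y = gten n F j i y.
Proof. intros. apply (pderiv_comm n _ _ _ _ (half_sq_Ck 2)); auto. Qed.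

Definition dgten (a b c : nat) (y : nat -> R) := pderiv (gten n F b c) a y.

(* [dgten a b c] is the third derivative of [F^2/2] in [y^a, y^b, y^c]. *)
Lemma dgten_sym a b c y : (a < n)%nat -> (b < n)%nat -> (c < n)%nat -> nonzero n y ->
  dgten a b c y = dgten b a c y.
Proof.
  intros Ha Hb Hc Hy. unfold dgten.
  rewrite (pderiv_nonzero_ext n _ _ (fun z Hz => gten_sym b c z Hb Hc Hz) a y Ha Hy).
  unfold gten. rewrite (pderiv_comm n _ y b a); auto.
  - apply (pderiv_nonzero_ext n _ _ (fun z Hz => gten_sym c a z Hc Ha Hz) b y Hb Hy).
  - apply (Ck_pderiv n 2 _ half_sq); auto.
Qed.

Lemma ginv_right k q y : (k < n)%nat -> (q < n)%nat -> nonzero n y ->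
  rsum n (fun j => gten n F k j y * ginv n F j q y) = kdelta k q.
Proof.
  intros Hk Hq Hy.
  apply (left_inverse_sym_right n (fun a b => gten n F a b y) (fun a b => ginv n F a b y)); auto.
  - intros; apply gten_sym; auto.
  - intros p r Hp Hr. unfold ginv.
    set (P := fun m : nat -> nat -> R => forall p q, (p < n)%nat -> (q < n)%nat ->
       rsum n (fun h => m p h * gten n F h q y) = kdelta p q).
    assert (Hex : exists m, P m).
    { apply PosDefInverse.posdef_left_inverse. intros v Hv. apply HM; auto. }
    exact (epsilon_spec (inhabits (fun _ _ : nat => 0)) P Hex p r Hp Hr).
Qed.

End Minkowski.

(** * First variation of the bienergy *)

Lemma smooth1_derivs (f : R -> R) : smooth1 f ->
  forall s, derivable_pt_lim f s (deriv f s) /\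
    derivable_pt_lim (fun u => deriv f u) s (deriv (fun u => deriv f u) s) /\
    derivable_pt_lim (fun u => deriv (fun u => deriv f u) u) s
        (deriv (fun u => deriv (fun u => deriv f u) u) s) /\
    (exists l, derivable_pt_lim (fun u => deriv (fun u => deriv (fun u => deriv f u) u) u) s l).
Proof.
  intros [D [HD0 HD]] s. subst f.
  assert (Hd : forall k u, deriv (D k) u = D (S k) u) by (intros; apply deriv_lim, HD).
  assert (Ek : forall k, (fun u => deriv (D k) u) = D (S k)).
  { intros; apply functional_extensionality; intro; apply Hd. }
  repeat (rewrite Ek || rewrite Hd).
  split; [| split; [| split]]; try apply HD.
  exists (D 4%nat s). apply HD.
Qed.

Section SmoothCurve.
Variables (n : nat) (x : R -> nat -> R).
Hypothesis Hx : smooth_curve n x.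

Lemma curve_derivable i s : (i < n)%nat -> derivable_pt_lim (fun u => x u i) s (vel x s i).
Proof. intros Hi. apply (smooth1_derivs _ (Hx i Hi) s). Qed.

Lemma vel_derivable i s : (i < n)%nat -> derivable_pt_lim (fun u => vel x u i) s (acc x s i).
Proof. intros Hi. apply (smooth1_derivs _ (Hx i Hi) s). Qed.

Lemma acc_derivable i s : (i < n)%nat -> derivable_pt_lim (fun u => acc x u i) s (jerk x s i).
Proof. intros Hi. apply (smooth1_derivs _ (Hx i Hi) s). Qed.

Lemma vel_continuous i s : (i < n)%nat -> continuity_pt (fun u => vel x u i) s.
Proof. intros; eapply derivable_pt_lim_continuity_pt, vel_derivable; auto. Qed.

Lemma acc_continuous i s : (i < n)%nat -> continuity_pt (fun u => acc x u i) s.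
Proof. intros; eapply derivable_pt_lim_continuity_pt, acc_derivable; auto. Qed.

Lemma jerk_continuous i s : (i < n)%nat -> continuity_pt (fun u => jerk x u i) s.
Proof.
  intros Hi. destruct (smooth1_derivs _ (Hx i Hi) s) as [_ [_ [_ [l Hl]]]].
  eapply derivable_pt_lim_continuity_pt; eauto.
Qed.

End SmoothCurve.

Lemma unit_speed_vel_nonzero n F a b x s : Minkowski n F -> unit_speed n F a b x ->
  a <= s <= b -> nonzero n (vel x s).
Proof.
  intros HM Hus Hs. apply NNPP. intros Hn. pose proof (Hus s Hs) as H1.
  rewrite (Minkowski_depends_on_first n F HM (vel x s) (fun _ => 0) (not_nonzero n _ Hn)),
    (Minkowski_zero n F HM) in H1.
  lra.
Qed.

Section Variation.
Variables (n : nat) (F : (nat -> R) -> R) (a b : R) (x V : R -> nat -> R).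
Hypotheses (HM : Minkowski n F) (Hab : a < b) (Hx : smooth_curve n x) (Hus : unit_speed n F a b x).
Hypothesis HV : smooth_curve n V.

Definition var_vel t s := fun k => vel x s k + t * vel V s k.
Definition var_acc t s := fun k => acc x s k + t * acc V s k.
Definition lagr t s := rsum n (fun i => rsum n (fun j =>
  gten n F i j (var_vel t s) * var_acc t s i * var_acc t s j)).
Definition dlagr t s := rsum n (fun i => rsum n (fun j =>
  rsum n (fun k => dgten n F k i j (var_vel t s) * vel V s k) * var_acc t s i * var_acc t s j
  + gten n F i j (var_vel t s) * acc V s i * var_acc t s j
  + gten n F i j (var_vel t s) * var_acc t s i * acc V s j)).

Lemma var_vel_0 s : var_vel 0 s = vel x s.
Proof. apply functional_extensionality; intro k. unfold var_vel. ring. Qed.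

Lemma var_acc_0 s : var_acc 0 s = acc x s.
Proof. apply functional_extensionality; intro k. unfold var_acc. ring. Qed.

Lemma vel_variation t s i : (i < n)%nat -> vel (fun s i => x s i + t * V s i) s i = var_vel t s i.
Proof.
  intros Hi. apply deriv_lim.
  apply (derivable_pt_lim_plus (fun u => x u i) (fun u => t * V u i)).
  - apply (curve_derivable n); auto.
  - apply (derivable_pt_lim_scal (fun u => V u i)), (curve_derivable n); auto.
Qed.

Lemma acc_variation t s i : (i < n)%nat -> acc (fun s i => x s i + t * V s i) s i = var_acc t s i.
Proof.
  intros Hi. unfold acc at 1.
  replace (fun u => vel (fun s i => x s i + t * V s i) u i) with (fun u => var_vel t u i)
    by (apply functional_extensionality; intro u; rewrite vel_variation; auto).
  apply deriv_lim.
  apply (derivable_pt_lim_plus (fun u => vel x u i) (fun u => t * vel V u i)).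
  - apply (vel_derivable n); auto.
  - apply (derivable_pt_lim_scal (fun u => vel V u i)), (vel_derivable n); auto.
Qed.

Lemma E2_variation t : E2 n F a b (fun s i => x s i + t * V s i) = / 2 * Rint (lagr t) a b.
Proof.
  unfold E2. do 2 f_equal. apply functional_extensionality; intro s.
  apply rsum_ext; intros i Hi. apply rsum_ext; intros j Hj.
  rewrite !acc_variation by auto.
  rewrite (gten_depends_on_first n F HM i j Hi Hj _ (var_vel t s)); auto.
  intros k Hk. apply vel_variation; auto.
Qed.

(* [|y| >= mu > 0] on the compact [a, b] while [|V'| <= K], so [y + t V'] stays nonzero
   for [|t| < mu / (K + 1) <= 1]. *)
Lemma var_vel_nonzero_uniform : exists t0, 0 < t0 /\
  forall t s, Rabs t < t0 -> a <= s <= b -> nonzero n (var_vel t s).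
Proof.
  set (sq := fun (v : R -> nat -> R) s => rsum n (fun k => vel v s k * vel v s k)).
  assert (Hsq : forall v s, smooth_curve n v -> continuity_pt (sq v) s).
  { intros v s Hv. apply continuity_pt_rsum. intros i Hi.
    apply continuity_pt_mult; apply (vel_continuous n); auto. }
  destruct (continuity_ab_min (sq x) a b) as [smin [Hmin Hsmin]]; [lra | intros; apply Hsq; auto |].
  destruct (continuity_ab_maj (sq V) a b) as [smax [Hmax Hsmax]]; [lra | intros; apply Hsq; auto |].
  set (mu := sq x smin). set (K := sq V smax).
  assert (Hmu : 0 < mu) by (apply rsum_sqr_pos, (unit_speed_vel_nonzero n F a b); auto).
  assert (HK : 0 <= K) by (apply rsum_nonneg; intros; apply Rle_0_sqr).
  exists (Rmin 1 (mu / (K + 1))). split; [apply Rmin_pos; [lra | apply Rdiv_lt_0_compat; lra] |].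
  intros t s Ht Hs. apply NNPP. intros HN.
  assert (Hm : sq x s = t * t * sq V s).
  { unfold sq. rewrite <- rsum_scal_l. apply rsum_ext. intros k Hk.
    pose proof (not_nonzero n _ HN k Hk) as H0. unfold var_vel in H0.
    replace (vel x s k) with (- (t * vel V s k)) by lra. ring. }
  specialize (Hmin s Hs). specialize (Hmax s Hs). fold mu K in Hmin, Hmax.
  assert (Ht1 : Rabs t < 1) by (eapply Rlt_le_trans; [exact Ht | apply Rmin_l]).
  assert (Ht2 : Rabs t < mu / (K + 1)) by (eapply Rlt_le_trans; [exact Ht | apply Rmin_r]).
  assert (Htt : t * t <= Rabs t).
  { rewrite <- (Rabs_pos_eq (t * t)) by apply Rle_0_sqr. rewrite Rabs_mult.
    pose proof (Rabs_pos t). nra. }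
  assert (t * t * sq V s <= t * t * K) by (apply Rmult_le_compat_l; auto; apply Rle_0_sqr).
  assert (t * t * K <= Rabs t * K) by (apply Rmult_le_compat_r; auto).
  assert (Rabs t * K <= mu / (K + 1) * K) by (apply Rmult_le_compat_r; lra).
  assert (mu / (K + 1) * K < mu).
  { apply Rmult_lt_reg_r with (K + 1); [lra |]. field_simplify; [nra | lra]. }
  lra.
Qed.

Lemma lagr_derivable t s : nonzero n (var_vel t s) ->
  derivable_pt_lim (fun u => lagr u s) t (dlagr t s).
Proof.
  intros Hnz. unfold lagr, dlagr.
  apply derivable_pt_lim_rsum; intros i Hi. apply derivable_pt_lim_rsum; intros j Hj.
  assert (Haff : forall k, derivable_pt_lim (fun u => vel x s k + u * vel V s k) t (vel V s k)).
  { intros k. eapply derivable_pt_lim_ext; [| apply (derivable_pt_lim_affine (vel V s k) (vel x s k))].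
    intros u. cbv beta. ring. }
  assert (Hacc : forall k, derivable_pt_lim (fun u => var_acc u s k) t (acc V s k)).
  { intros k. eapply derivable_pt_lim_ext; [| apply (derivable_pt_lim_affine (acc V s k) (acc x s k))].
    intros u. unfold var_acc. cbv beta. ring. }
  pose proof (chain_rule n (gten n F i j) (fun u => var_vel u s) t (fun k => vel V s k)
     (gten_Ck n F HM 1 i j Hi Hj) (gten_depends_on_first n F HM i j Hi Hj) Hnz
     (fun k _ => Haff k)) as Hg.
  eapply derivable_pt_lim_eq.
  - apply (derivable_pt_lim_mult (fun u => gten n F i j (var_vel u s) * var_acc u s i)
             (fun u => var_acc u s j)); [| apply Hacc].
    apply (derivable_pt_lim_mult (fun u => gten n F i j (var_vel u s)) (fun u => var_acc u s i));
      [apply Hg | apply Hacc].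
  - unfold dgten. ring.
Qed.

Lemma var_vel_continuous k t s : (k < n)%nat -> continuity_2d_pt (fun u v => var_vel u v k) t s.
Proof.
  intros Hk. unfold var_vel.
  apply (continuity_2d_pt_plus (fun _ v => vel x v k) (fun u v => u * vel V v k)).
  - apply (continuity_2d_pt_snd (fun v => vel x v k)), (vel_continuous n); auto.
  - apply (continuity_2d_pt_mult (fun u _ => u) (fun _ v => vel V v k)).
    + apply continuity_2d_pt_id1.
    + apply (continuity_2d_pt_snd (fun v => vel V v k)), (vel_continuous n); auto.
Qed.

Lemma var_acc_continuous k t s : (k < n)%nat -> continuity_2d_pt (fun u v => var_acc u v k) t s.
Proof.
  intros Hk. unfold var_acc.
  apply (continuity_2d_pt_plus (fun _ v => acc x v k) (fun u v => u * acc V v k)).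
  - apply (continuity_2d_pt_snd (fun v => acc x v k)), (acc_continuous n); auto.
  - apply (continuity_2d_pt_mult (fun u _ => u) (fun _ v => acc V v k)).
    + apply continuity_2d_pt_id1.
    + apply (continuity_2d_pt_snd (fun v => acc V v k)), (acc_continuous n); auto.
Qed.

Lemma var_vel_comp_continuous G t s : cont_on n (nonzero n) G -> nonzero n (var_vel t s) ->
  continuity_2d_pt (fun u v => G (var_vel u v)) t s.
Proof.
  intros HG Hnz. apply (cont_on_continuity_2d_pt n (nonzero n)); auto.
  intros; apply var_vel_continuous; auto.
Qed.

Lemma lagr_continuous t s : nonzero n (var_vel t s) -> continuity_2d_pt lagr t s.
Proof.
  intros Hnz. unfold lagr.
  apply (continuity_2d_pt_rsum n (fun i u v => rsum n (fun j =>
    gten n F i j (var_vel u v) * var_acc u v i * var_acc u v j))). intros i Hi.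
  apply (continuity_2d_pt_rsum n (fun j u v =>
    gten n F i j (var_vel u v) * var_acc u v i * var_acc u v j)). intros j Hj.
  repeat apply continuity_2d_pt_mult; auto using var_acc_continuous.
  apply var_vel_comp_continuous; auto. apply (Ck_cont n 0), gten_Ck; auto.
Qed.

Lemma dlagr_continuous t s : nonzero n (var_vel t s) -> continuity_2d_pt dlagr t s.
Proof.
  intros Hnz. unfold dlagr.
  assert (Hg : forall i j, (i < n)%nat -> (j < n)%nat ->
            continuity_2d_pt (fun u v => gten n F i j (var_vel u v)) t s).
  { intros. apply var_vel_comp_continuous; auto. apply (Ck_cont n 0), gten_Ck; auto. }
  assert (HaV : forall k, (k < n)%nat -> continuity_2d_pt (fun _ v => acc V v k) t s).
  { intros k Hk. apply (continuity_2d_pt_snd (fun v => acc V v k)), (acc_continuous n); auto. }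
  apply (continuity_2d_pt_rsum n (fun i u v => rsum n (fun j =>
    rsum n (fun k => dgten n F k i j (var_vel u v) * vel V v k) * var_acc u v i * var_acc u v j
    + gten n F i j (var_vel u v) * acc V v i * var_acc u v j
    + gten n F i j (var_vel u v) * var_acc u v i * acc V v j))). intros i Hi.
  apply (continuity_2d_pt_rsum n (fun j u v =>
    rsum n (fun k => dgten n F k i j (var_vel u v) * vel V v k) * var_acc u v i * var_acc u v j
    + gten n F i j (var_vel u v) * acc V v i * var_acc u v j
    + gten n F i j (var_vel u v) * var_acc u v i * acc V v j)). intros j Hj.
  assert (Hs : continuity_2d_pt (fun u v => rsum n (fun k => dgten n F k i j (var_vel u v) * vel V v k)) t s).
  { apply (continuity_2d_pt_rsum n (fun k u v => dgten n F k i j (var_vel u v) * vel V v k)).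
    intros k Hk.
    apply (continuity_2d_pt_mult (fun u v => dgten n F k i j (var_vel u v)) (fun _ v => vel V v k)).
    - apply var_vel_comp_continuous; auto.
      apply (Ck_cont n 0), (Ck_pderiv n 0); auto. apply gten_Ck; auto.
    - apply (continuity_2d_pt_snd (fun v => vel V v k)), (vel_continuous n); auto. }
  apply continuity_2d_pt_plus; [apply continuity_2d_pt_plus |];
    repeat apply continuity_2d_pt_mult; auto using var_acc_continuous.
Qed.

Lemma var_vel_nonzero_loc t s : nonzero n (var_vel t s) ->
  locally_2d (fun u v => nonzero n (var_vel u v)) t s.
Proof.
  intros Hnz. destruct (nonzero_open n (var_vel t s) Hnz) as [r [Hr Hop]].
  destruct (common_delta n (fun k d => forall u v, Rabs (u - t) < d -> Rabs (v - s) < d ->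
              Rabs (var_vel u v k - var_vel t s k) < r)) as [d [Hd Hdd]].
  { intros k d d' _ Hd' H u v Hu Hv. apply H; lra. }
  { intros k Hk. destruct (var_vel_continuous k t s Hk (mkposreal r Hr)) as [d Hd].
    exists d. split; [apply cond_pos |]. intros u v Hu Hv. apply (Hd u v Hu Hv). }
  exists (mkposreal d Hd). intros u v Hu Hv. apply Hop. intros k Hk. apply Hdd; auto.
Qed.

Lemma first_variation :
  derivable_pt_lim (fun t => E2 n F a b (fun s i => x s i + t * V s i)) 0 (/ 2 * RInt (dlagr 0) a b).
Proof.
  destruct var_vel_nonzero_uniform as [t0 [Ht0 Hunif]].
  assert (Hmin : Rmin a b = a) by (apply Rmin_left; lra).
  assert (Hmax : Rmax a b = b) by (apply Rmax_right; lra).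
  assert (Hnz0 : forall s, a <= s <= b -> nonzero n (var_vel 0 s)).
  { intros s Hs. rewrite var_vel_0. apply (unit_speed_vel_nonzero n F a b); auto. }
  assert (Hex : forall t, Rabs t < t0 -> ex_RInt (lagr t) a b).
  { intros t Ht. apply ex_RInt_continuity_pt; [lra |]. intros z Hz.
    apply (continuity_2d_pt_section lagr t z), lagr_continuous, Hunif; auto. }
  apply derivable_pt_lim_loc with (f := fun t => / 2 * RInt (lagr t) a b).
  { exists t0. split; auto. intros u Hu. rewrite Rminus_0_r in Hu.
    rewrite E2_variation, Rint_RInt; auto. }
  apply (derivable_pt_lim_scal (fun t => RInt (lagr t) a b)), is_derive_Reals.
  replace (RInt (dlagr 0) a b) with (RInt (fun s => Derive (fun u => lagr u s) 0) a b).
  2: { apply RInt_ext. rewrite Hmin, Hmax. intros z Hz.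
       apply Derive_lim, lagr_derivable, Hnz0. lra. }
  apply (is_derive_RInt_param (fun u s => lagr u s) a b 0).
  - apply (locally_ball 0 t0); auto. intros u Hu s Hs. rewrite Rminus_0_r in Hu.
    rewrite Hmin, Hmax in Hs.
    eapply ex_derive_lim, lagr_derivable, Hunif; auto.
  - intros s Hs. rewrite Hmin, Hmax in Hs. apply continuity_2d_pt_ext_loc with (f := dlagr); [| apply dlagr_continuous; auto].
    destruct (var_vel_nonzero_loc 0 s (Hnz0 s Hs)) as [d Hd]. exists d. intros u v Hu Hv.
    symmetry. apply Derive_lim, lagr_derivable, Hd; auto.
  - apply (locally_ball 0 t0); auto. intros u Hu. rewrite Rminus_0_r in Hu. apply Hex; auto.
Qed.

End Variation.

(** * Integration by parts *)

Section TensorIdentities.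
Variables (n : nat) (g : nat -> nat -> R) (d : nat -> nat -> nat -> R) (T : nat -> R).
Hypothesis Hd : forall l i j, (l < n)%nat -> (i < n)%nat -> (j < n)%nat -> d l i j = d i l j.

Lemma rsum_rsum_sym_contract k : (k < n)%nat ->
  rsum n (fun j => rsum n (fun l => d l k j * T l * T j)) =
  rsum n (fun i => rsum n (fun j => d k i j * T i * T j)).
Proof.
  intros Hk. rewrite rsum_swap. apply rsum_ext; intros i Hi. apply rsum_ext; intros j Hj.
  rewrite Hd; auto.
Qed.

Lemma quadratic_variation_identity (V1 V2 : nat -> R) :
  (forall i j, (i < n)%nat -> (j < n)%nat -> g i j = g j i) ->
  / 2 * rsum n (fun i => rsum n (fun j => rsum n (fun k => d k i j * V1 k) * T i * T j
     + g i j * V2 i * T j + g i j * T i * V2 j))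
  = rsum n (fun k => rsum n (fun j => g k j * T j) * V2 k
      + / 2 * rsum n (fun j => rsum n (fun l => d l k j * T l * T j)) * V1 k).
Proof.
  intros Hg.
  rewrite (rsum_ext n _ (fun i => rsum n (fun j => rsum n (fun k => d k i j * V1 k) * T i * T j)
     + rsum n (fun j => g i j * V2 i * T j) + rsum n (fun j => g i j * T i * V2 j)))
    by (intros; rewrite <- !rsum_plus; auto).
  rewrite rsum_plus, rsum_plus.
  assert (E1 : rsum n (fun i => rsum n (fun j => rsum n (fun k => d k i j * V1 k) * T i * T j)) =
               rsum n (fun k => rsum n (fun j => rsum n (fun l => d l k j * T l * T j)) * V1 k)).
  { rewrite (rsum_ext n (fun k => _ * V1 k)
      (fun k => rsum n (fun i => rsum n (fun j => d k i j * T i * T j)) * V1 k))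
      by (intros k Hk; rewrite (rsum_rsum_sym_contract k Hk); reflexivity).
    transitivity (rsum n (fun i => rsum n (fun k => rsum n (fun j => d k i j * V1 k * T i * T j)))).
    { apply rsum_ext; intros i Hi. rewrite rsum_swap. apply rsum_ext; intros j Hj.
      rewrite <- !rsum_scal_r. apply rsum_ext; intros. ring. }
    rewrite rsum_swap. apply rsum_ext; intros k Hk.
    rewrite <- rsum_scal_r. apply rsum_ext; intros i Hi.
    rewrite <- rsum_scal_r. apply rsum_ext; intros. ring. }
  assert (E2 : rsum n (fun i => rsum n (fun j => g i j * V2 i * T j)) =
               rsum n (fun k => rsum n (fun j => g k j * T j) * V2 k)).
  { apply rsum_ext; intros i Hi. rewrite <- rsum_scal_r. apply rsum_ext; intros. ring. }
  assert (E3 : rsum n (fun i => rsum n (fun j => g i j * T i * V2 j)) =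
               rsum n (fun k => rsum n (fun j => g k j * T j) * V2 k)).
  { rewrite rsum_swap. apply rsum_ext; intros k Hk.
    rewrite <- rsum_scal_r. apply rsum_ext; intros i Hi. rewrite (Hg i k) by auto. ring. }
  rewrite E1, E2, E3, rsum_plus, (rsum_ext n (fun k => / 2 * _ * V1 k)
    (fun k => / 2 * (rsum n (fun j => rsum n (fun l => d l k j * T l * T j)) * V1 k)))
    by (intros; ring).
  rewrite rsum_scal_l. field.
Qed.

Lemma inverse_contract (M : nat -> nat -> R) k : (k < n)%nat ->
  (forall k m, (k < n)%nat -> (m < n)%nat -> rsum n (fun j => g k j * M j m) = kdelta k m) ->
  rsum n (fun j => g k j * rsum n (fun h => rsum n (fun l =>
      / 2 * rsum n (fun m => M j m * d l m h) * T h * T l)))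
  = / 2 * rsum n (fun h => rsum n (fun l => d l k h * T h * T l)).
Proof.
  intros Hk HM.
  transitivity (rsum n (fun j => rsum n (fun h => rsum n (fun l =>
       / 2 * rsum n (fun m => g k j * M j m * d l m h) * T h * T l)))).
  { apply rsum_ext; intros j Hj. rewrite <- rsum_scal_l. apply rsum_ext; intros h Hh.
    rewrite <- rsum_scal_l. apply rsum_ext; intros l Hl.
    rewrite (rsum_ext n (fun m => g k j * M j m * d l m h) (fun m => g k j * (M j m * d l m h)))
      by (intros; ring).
    rewrite rsum_scal_l. ring. }
  rewrite rsum_swap, <- rsum_scal_l. apply rsum_ext; intros h Hh.
  rewrite rsum_swap, <- rsum_scal_l. apply rsum_ext; intros l Hl.
  transitivity (/ 2 * rsum n (fun m => rsum n (fun j => g k j * M j m * d l m h)) * T h * T l).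
  { rewrite (rsum_swap n n (fun m j => g k j * M j m * d l m h)).
    rewrite <- rsum_scal_l, <- rsum_scal_r, <- rsum_scal_r. apply rsum_ext; intros. ring. }
  rewrite (rsum_ext n _ (fun m => kdelta k m * d l m h)).
  - rewrite rsum_kdelta_l by auto. ring.
  - intros m Hm. rewrite <- (HM k m), <- rsum_scal_r by auto. apply rsum_ext; intros. ring.
Qed.

End TensorIdentities.

Definition momentum n F x s k := rsum n (fun j => gten n F k j (vel x s) * acc x s j).

Definition dmomentum n F x s k := rsum n (fun j =>
  rsum n (fun l => dgten n F l k j (vel x s) * acc x s l) * acc x s j
  + gten n F k j (vel x s) * jerk x s j).

Definition euler_lagrange n F x s k := dmomentum n F x s k
  - / 2 * rsum n (fun j => rsum n (fun l => dgten n F l k j (vel x s) * acc x s l * acc x s j)).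

Lemma gDtau_euler_lagrange n F x s k : Minkowski n F -> nonzero n (vel x s) -> (k < n)%nat ->
  rsum n (fun j => gten n F k j (vel x s) * Dtau n F x s j) = euler_lagrange n F x s k.
Proof.
  intros HM Hnz Hk. unfold euler_lagrange, dmomentum, Dtau.
  rewrite (rsum_ext n (fun j => gten n F k j (vel x s) * (jerk x s j + _))
      (fun j => gten n F k j (vel x s) * jerk x s j + gten n F k j (vel x s) *
         rsum n (fun h => rsum n (fun l =>
           / 2 * rsum n (fun m => ginv n F j m (vel x s) * dgten n F l m h (vel x s))
             * acc x s h * acc x s l)))) by (intros; unfold Cart, dgten; ring).
  rewrite rsum_plus, (inverse_contract n (fun i j => gten n F i j (vel x s))
    (fun l i j => dgten n F l i j (vel x s)) (acc x s) (fun i j => ginv n F i j (vel x s)) k).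
  - rewrite (rsum_ext n (fun j => rsum n (fun l => _ * acc x s l) * acc x s j + _)
      (fun j => rsum n (fun l => dgten n F l k j (vel x s) * acc x s l * acc x s j)
        + gten n F k j (vel x s) * jerk x s j)) by (intros; rewrite <- rsum_scal_r; auto).
    rewrite rsum_plus, (rsum_ext n (fun h => rsum n (fun l => _ * acc x s h * acc x s l))
      (fun j => rsum n (fun l => dgten n F l k j (vel x s) * acc x s l * acc x s j)))
      by (intros; apply rsum_ext; intros; ring).
    field.
  - exact Hk.
  - intros p q Hp Hq. apply (ginv_right n F HM); auto.
Qed.

Section CurveContinuity.
Variables (n : nat) (F : (nat -> R) -> R) (x : R -> nat -> R).
Hypotheses (HM : Minkowski n F) (Hx : smooth_curve n x).

Lemma gten_vel_continuous i j s : (i < n)%nat -> (j < n)%nat -> nonzero n (vel x s) ->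
  continuity_pt (fun u => gten n F i j (vel x u)) s.
Proof.
  intros Hi Hj Hnz. apply (cont_on_continuity_pt n (nonzero n)); auto.
  - apply (Ck_cont n 0), gten_Ck; auto.
  - intros; apply (vel_continuous n); auto.
Qed.

Lemma dgten_vel_continuous l i j s : (l < n)%nat -> (i < n)%nat -> (j < n)%nat ->
  nonzero n (vel x s) -> continuity_pt (fun u => dgten n F l i j (vel x u)) s.
Proof.
  intros Hl Hi Hj Hnz. apply (cont_on_continuity_pt n (nonzero n)); auto.
  - apply (Ck_cont n 0), (Ck_pderiv n 0); auto. apply gten_Ck; auto.
  - intros; apply (vel_continuous n); auto.
Qed.

Lemma momentum_continuous k s : (k < n)%nat -> nonzero n (vel x s) ->
  continuity_pt (fun u => momentum n F x u k) s.
Proof.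
  intros Hk Hnz. apply continuity_pt_rsum; intros j Hj.
  apply (continuity_pt_mult _ (fun u => acc x u j));
    [apply gten_vel_continuous | apply (acc_continuous n)]; auto.
Qed.

Lemma dgten_acc_acc_continuous k j s : (k < n)%nat -> (j < n)%nat -> nonzero n (vel x s) ->
  continuity_pt (fun u => rsum n (fun l => dgten n F l k j (vel x u) * acc x u l) * acc x u j) s.
Proof.
  intros Hk Hj Hnz.
  apply (continuity_pt_mult _ (fun u => acc x u j)); [| apply (acc_continuous n); auto].
  apply continuity_pt_rsum; intros l Hl.
  apply (continuity_pt_mult _ (fun u => acc x u l));
    [apply dgten_vel_continuous | apply (acc_continuous n)]; auto.
Qed.

Lemma dmomentum_continuous k s : (k < n)%nat -> nonzero n (vel x s) ->
  continuity_pt (fun u => dmomentum n F x u k) s.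
Proof.
  intros Hk Hnz. apply continuity_pt_rsum; intros j Hj.
  apply (continuity_pt_plus (fun u => _ * acc x u j) (fun u => _ * jerk x u j)).
  - apply dgten_acc_acc_continuous; auto.
  - apply (continuity_pt_mult _ (fun u => jerk x u j));
      [apply gten_vel_continuous | apply (jerk_continuous n)]; auto.
Qed.

Lemma euler_lagrange_continuous k s : (k < n)%nat -> nonzero n (vel x s) ->
  continuity_pt (fun u => euler_lagrange n F x u k) s.
Proof.
  intros Hk Hnz.
  apply (continuity_pt_minus (fun u => dmomentum n F x u k) (fun u => / 2 * rsum n _));
    [apply dmomentum_continuous; auto |].
  apply (continuity_pt_mult (fun _ => / 2) (fun u => rsum n _));
    [apply continuity_pt_const; intros p q; auto |].
  apply continuity_pt_rsum; intros j Hj.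
  eapply continuity_pt_ext; [| apply (dgten_acc_acc_continuous k j s); auto].
  intros u. cbv beta. rewrite <- rsum_scal_r. reflexivity.
Qed.

End CurveContinuity.

Section ByParts.
Variables (n : nat) (F : (nat -> R) -> R) (a b : R) (x V : R -> nat -> R).
Hypotheses (HM : Minkowski n F) (Hab : a < b) (Hx : smooth_curve n x) (Hus : unit_speed n F a b x).
Hypothesis HV : smooth_curve n V.

Let pairing s := rsum n (fun k => momentum n F x s k * vel V s k).
Let dpairing s := rsum n (fun k => dmomentum n F x s k * vel V s k + momentum n F x s k * acc V s k).

Let half_dlagr_0 s : nonzero n (vel x s) ->
  / 2 * dlagr n F x V 0 s = dpairing s - rsum n (fun k => euler_lagrange n F x s k * vel V s k).
Proof.
  intros Hnz. unfold dlagr. rewrite var_vel_0, var_acc_0.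
  rewrite (quadratic_variation_identity n (fun i j => gten n F i j (vel x s))
             (fun l i j => dgten n F l i j (vel x s)) (acc x s)).
  - unfold dpairing. rewrite <- rsum_minus. apply rsum_ext; intros k Hk.
    unfold euler_lagrange, momentum. ring.
  - intros l i j Hl Hi Hj. apply (dgten_sym n F HM); auto.
  - intros i j Hi Hj. apply (gten_sym n F HM); auto.
Qed.

Let pairing_derivable s : nonzero n (vel x s) -> derivable_pt_lim pairing s (dpairing s).
Proof.
  intros Hnz. apply derivable_pt_lim_rsum; intros k Hk.
  apply (derivable_pt_lim_mult (fun u => momentum n F x u k) (fun u => vel V u k));
    [| apply (vel_derivable n); auto].
  apply derivable_pt_lim_rsum; intros j Hj.
  apply (derivable_pt_lim_mult (fun u => gten n F k j (vel x u)) (fun u => acc x u j));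
    [| apply (acc_derivable n); auto].
  eapply derivable_pt_lim_eq.
  - apply (chain_rule n (gten n F k j) (fun u => vel x u) s (fun l => acc x s l)); auto.
    + apply gten_Ck; auto.
    + apply gten_depends_on_first; auto.
    + intros i Hi. apply (vel_derivable n); auto.
  - unfold dgten. apply rsum_ext. intros; ring.
Qed.

Let dpairing_continuous s : nonzero n (vel x s) -> continuity_pt dpairing s.
Proof.
  intros Hnz. apply continuity_pt_rsum; intros k Hk.
  apply (continuity_pt_plus (fun u => _ * vel V u k) (fun u => _ * acc V u k)).
  - apply (continuity_pt_mult _ (fun u => vel V u k));
      [apply (dmomentum_continuous n) | apply (vel_continuous n)]; auto.
  - apply (continuity_pt_mult _ (fun u => acc V u k));
      [apply (momentum_continuous n) | apply (acc_continuous n)]; auto.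
Qed.

Lemma first_variation_by_parts : (forall i, (i < n)%nat -> vel V a i = 0 /\ vel V b i = 0) ->
  / 2 * RInt (dlagr n F x V 0) a b =
  - RInt (fun s => rsum n (fun k => euler_lagrange n F x s k * vel V s k)) a b.
Proof.
  intros Hend.
  assert (Hnz : forall s, a <= s <= b -> nonzero n (vel x s))
    by (intros; apply (unit_speed_vel_nonzero n F a b); auto).
  assert (Hpair0 : forall s, (forall i, (i < n)%nat -> vel V s i = 0) -> pairing s = 0).
  { intros s H. unfold pairing. rewrite <- (rsum_0 n). apply rsum_ext.
    intros k Hk. rewrite H; auto; ring. }
  assert (HexD : ex_RInt (dlagr n F x V 0) a b).
  { apply ex_RInt_continuity_pt; [lra |]. intros s Hs.
    apply (continuity_2d_pt_section (dlagr n F x V) 0 s), (dlagr_continuous n F x V); auto.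
    rewrite var_vel_0. auto. }
  assert (HexP : ex_RInt dpairing a b)
    by (apply ex_RInt_continuity_pt; [lra | intros; apply dpairing_continuous; auto]).
  rewrite (RInt_ext_R (fun s => rsum n (fun k => euler_lagrange n F x s k * vel V s k))
    (fun s => dpairing s - / 2 * dlagr n F x V 0 s)).
  - rewrite RInt_minus_R, RInt_scal_R; auto.
    + rewrite (RInt_derivable_pt_lim pairing dpairing a b); [| lra |
        intros; apply pairing_derivable, Hnz; auto | intros; apply dpairing_continuous, Hnz; auto].
      rewrite !Hpair0 by (intros; apply Hend; auto). ring.
    + apply ex_RInt_scal_R; auto.
  - rewrite Rmin_left, Rmax_right by lra. intros s Hs.
    rewrite half_dlagr_0 by (apply Hnz; lra). lra.
Qed.

End ByParts.
(** * Smooth bump functions *)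

Fixpoint Cn (k : nat) (f : R -> R) : Prop :=
  match k with
  | O => True
  | S k => exists f', (forall t, derivable_pt_lim f t (f' t)) /\ Cn k f'
  end.

Definition Cinf f := forall k, Cn k f.

Fixpoint iter_deriv (k : nat) (f : R -> R) : R -> R :=
  match k with O => f | S k => iter_deriv k (fun t => deriv f t) end.

Lemma iter_deriv_lim k : forall f, Cn (S k) f -> forall t, derivable_pt_lim (iter_deriv k f) t (iter_deriv (S k) f t).
Proof.
  induction k; intros f [f' [Hd Hc]] t.
  - simpl. rewrite (deriv_lim f t (f' t)); auto.
  - assert (E : (fun t => deriv f t) = f').
    { apply functional_extensionality; intro u. apply deriv_lim; auto. }
    change (iter_deriv (S k) f) with (iter_deriv k (fun t => deriv f t)).
    change (iter_deriv (S (S k)) f t) with (iter_deriv (S k) (fun t => deriv f t) t).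
    rewrite E. apply IHk. auto.
Qed.

Lemma Cinf_smooth1 f : Cinf f -> smooth1 f.
Proof.
  intros H. exists (fun k => iter_deriv k f). split; auto.
  intros k t. apply iter_deriv_lim. apply H.
Qed.

Lemma Cn_S k : forall f, Cn (S k) f -> Cn k f.
Proof.
  induction k; intros f H; simpl; auto.
  destruct H as [f' [Hd Hc]]. exists f'. split; auto.
Qed.

Lemma Cn_ext k f g : (forall t, f t = g t) -> Cn k f -> Cn k g.
Proof. intros H. replace g with f; auto. apply functional_extensionality; auto. Qed.

Lemma Cn_const k c : Cn k (fun _ => c).
Proof.
  revert c; induction k; intros c; simpl; auto.
  exists (fun _ => 0). split; auto. intros; apply derivable_pt_lim_const.
Qed.

Lemma Cn_plus k : forall f g, Cn k f -> Cn k g -> Cn k (fun t => f t + g t).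
Proof.
  induction k; intros f g Hf Hg; simpl; auto.
  destruct Hf as [f' [Hf1 Hf2]], Hg as [g' [Hg1 Hg2]].
  exists (fun t => f' t + g' t). split; auto.
  intros t. apply (derivable_pt_lim_plus f g); auto.
Qed.

Lemma Cn_mult k : forall f g, Cn k f -> Cn k g -> Cn k (fun t => f t * g t).
Proof.
  induction k; intros f g Hf Hg; simpl; auto.
  pose proof (Cn_S k f Hf) as Hfm. pose proof (Cn_S k g Hg) as Hgm.
  destruct Hf as [f' [Hf1 Hf2]], Hg as [g' [Hg1 Hg2]].
  exists (fun t => f' t * g t + f t * g' t). split.
  - intros t. apply (derivable_pt_lim_mult f g); auto.
  - apply Cn_plus; apply IHk; auto.
Qed.

Lemma Cn_inv k : forall f, Cn k f -> (forall t, f t <> 0) -> Cn k (fun t => / f t).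
Proof.
  induction k; intros f Hf Hnz; simpl; auto.
  pose proof (Cn_S k f Hf) as Hfm.
  destruct Hf as [f' [Hf1 Hf2]].
  exists (fun t => - f' t * (/ f t * / f t)). split.
  - intros t. pose proof (derivable_pt_lim_div (fun _ => 1) f t 0 (f' t) (derivable_pt_lim_const 1 t) (Hf1 t) (Hnz t)) as H.
    eapply derivable_pt_lim_eq.
    + eapply derivable_pt_lim_ext; [|exact H]. intros u. unfold div_fct. field. auto.
    + unfold Rsqr. field. auto.
  - apply Cn_mult; [apply (Cn_ext k (fun t => -1 * f' t)); [intros; ring|apply Cn_mult; auto; apply Cn_const]|].
    apply Cn_mult; apply IHk; auto.
Qed.

Lemma Cn_affine k : forall f c d, Cn k f -> Cn k (fun t => f (c * t + d)).
Proof.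
  induction k; intros f c d Hf; simpl; auto.
  destruct Hf as [f' [Hf1 Hf2]].
  exists (fun t => c * f' (c * t + d)). split.
  - intros t. eapply derivable_pt_lim_eq.
    + apply (derivable_pt_lim_comp (fun t => c * t + d) f t c).
      * apply derivable_pt_lim_affine.
      * apply Hf1.
    + ring.
  - apply Cn_mult; [apply Cn_const| apply IHk; auto].
Qed.

Inductive is_poly : (R -> R) -> Prop :=
| poly_const c : is_poly (fun _ => c)
| poly_id : is_poly (fun u => u)
| poly_add p q : is_poly p -> is_poly q -> is_poly (fun u => p u + q u)
| poly_mul p q : is_poly p -> is_poly q -> is_poly (fun u => p u * q u).

Lemma is_poly_ext p q : (forall u, p u = q u) -> is_poly p -> is_poly q.
Proof. intros H. replace q with p; auto. apply functional_extensionality; auto. Qed.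

Lemma is_poly_derivable p : is_poly p -> exists p', is_poly p' /\ forall u, derivable_pt_lim p u (p' u).
Proof.
  induction 1.
  - exists (fun _ => 0). split; [apply poly_const| intros; apply derivable_pt_lim_const].
  - exists (fun _ => 1). split; [apply poly_const| intros; apply derivable_pt_lim_id].
  - destruct IHis_poly1 as [p' [Hp Hdp]], IHis_poly2 as [q' [Hq Hdq]].
    exists (fun u => p' u + q' u). split; [apply poly_add; auto|].
    intros u. apply (derivable_pt_lim_plus p q); auto.
  - destruct IHis_poly1 as [p' [Hp Hdp]], IHis_poly2 as [q' [Hq Hdq]].
    exists (fun u => p' u * q u + p u * q' u). split; [apply poly_add; apply poly_mul; auto|].
    intros u. apply (derivable_pt_lim_mult p q); auto.
Qed.

Lemma is_poly_bound p : is_poly p -> exists C m, 0 <= C /\ forall u, 1 <= u -> Rabs (p u) <= C * u ^ m.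
Proof.
  induction 1.
  - exists (Rabs c), 0%nat. split; [apply Rabs_pos|]. intros; simpl; lra.
  - exists 1, 1%nat. split; [lra|]. intros u Hu; simpl. rewrite Rabs_right; lra.
  - destruct IHis_poly1 as [C1 [m1 [HC1 H1]]], IHis_poly2 as [C2 [m2 [HC2 H2]]].
    exists (C1 + C2), (m1 + m2)%nat. split; [lra|]. intros u Hu.
    eapply Rle_trans; [apply Rabs_triang|].
    assert (u ^ m1 <= u ^ (m1 + m2)) by (apply Rle_pow; auto; lia).
    assert (u ^ m2 <= u ^ (m1 + m2)) by (apply Rle_pow; auto; lia).
    specialize (H1 u Hu). specialize (H2 u Hu).
    assert (C1 * u ^ m1 <= C1 * u ^ (m1 + m2)) by (apply Rmult_le_compat_l; auto).
    assert (C2 * u ^ m2 <= C2 * u ^ (m1 + m2)) by (apply Rmult_le_compat_l; auto).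
    lra.
  - destruct IHis_poly1 as [C1 [m1 [HC1 H1]]], IHis_poly2 as [C2 [m2 [HC2 H2]]].
    exists (C1 * C2), (m1 + m2)%nat. split; [apply Rmult_le_pos; auto|]. intros u Hu.
    rewrite Rabs_mult, pow_add.
    replace (C1 * C2 * (u ^ m1 * u ^ m2)) with ((C1 * u ^ m1) * (C2 * u ^ m2)) by ring.
    apply Rmult_le_compat; try apply Rabs_pos; auto.
Qed.

(* Closed under differentiation when [q] is a polynomial, hence smooth. *)
Definition exp_inv_poly (q : R -> R) (u : R) : R := if Rlt_dec 0 u then q (/ u) * exp (- / u) else 0.

Lemma exp_mult_INR N y : exp (INR N * y) = exp y ^ N.
Proof.
  induction N.
  - simpl. rewrite Rmult_0_l, exp_0; auto.
  - rewrite S_INR. replace ((INR N + 1) * y) with (y + INR N * y) by ring.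
    rewrite exp_plus, IHN. change (exp y ^ S N) with (exp y * exp y ^ N). auto.
Qed.

Lemma pow_div_le_exp N v : (0 < N)%nat -> 0 <= v -> (v / INR N) ^ N <= exp v.
Proof.
  intros HN Hv.
  assert (HNr : 0 < INR N) by (apply lt_0_INR; auto).
  replace v with (INR N * (v / INR N)) at 2 by (field; lra).
  rewrite exp_mult_INR. apply pow_incr. split.
  - unfold Rdiv; apply Rmult_le_pos; [lra| left; apply Rinv_0_lt_compat; lra].
  - pose proof (exp_ineq1_le (v / INR N)). lra.
Qed.

(* With [v = 1/h] and [N = deg q + 2], [e^v >= (v/N)^N] beats [v q(v)] by a factor [v]. *)
Lemma exp_inv_poly_lim0 q : is_poly q -> forall eps, 0 < eps -> exists d, 0 < d /\
  forall h, 0 < h -> h < d -> Rabs (q (/ h) * exp (- / h) / h) < eps.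
Proof.
  intros Hq eps Heps. destruct (is_poly_bound q Hq) as [C [m [HC Hb]]].
  set (N := S (S m)).
  set (K := C * INR N ^ N + 1).
  assert (HN : 0 < INR N) by (apply lt_0_INR; unfold N; lia).
  assert (HK : 0 < K) by (unfold K; pose proof (pow_le (INR N) N ltac:(lra)); nra).
  exists (Rmin 1 (eps / K)). split; [apply Rmin_pos; [lra| apply Rdiv_lt_0_compat; lra]|].
  intros h Hh Hhd.
  assert (Hh1 : h < 1) by (eapply Rlt_le_trans; [exact Hhd| apply Rmin_l]).
  assert (Hh2 : h < eps / K) by (eapply Rlt_le_trans; [exact Hhd| apply Rmin_r]).
  set (v := / h).
  assert (Hv : 1 < v) by (unfold v; rewrite <- Rinv_1; apply Rinv_lt_contravar; lra).
  assert (Hvh : h = / v) by (unfold v; rewrite Rinv_inv; auto).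
  rewrite Hvh. unfold Rdiv at 1. rewrite Rinv_inv.
  assert (Hexp : (v / INR N) ^ N <= exp v) by (apply pow_div_le_exp; [unfold N; lia| lra]).
  assert (Hvm : 0 < v ^ m) by (apply pow_lt; lra).
  assert (HvN : (v / INR N) ^ N = v ^ m * v * v / INR N ^ N).
  { unfold Rdiv. rewrite Rpow_mult_distr, pow_inv. unfold N. simpl. ring. }
  assert (HNN : 0 < INR N ^ N) by (apply pow_lt; auto).
  assert (Hpos : 0 < (v / INR N) ^ N) by (apply pow_lt; apply Rdiv_lt_0_compat; lra).
  rewrite Rabs_mult, Rabs_mult, (Rabs_right (exp _)) by (left; apply exp_pos).
  rewrite (Rabs_right v) by lra.
  rewrite exp_Ropp.
  assert (Hq1 := Hb v ltac:(lra)).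
  assert (Hinv : / exp v <= / ((v / INR N) ^ N)) by (apply Rinv_le_contravar; auto).
  assert (Hstep : Rabs (q v) * / exp v * v <= C * v ^ m * / ((v / INR N) ^ N) * v).
  { apply Rmult_le_compat_r; [lra|]. apply Rmult_le_compat; auto; try apply Rabs_pos.
    left; apply Rinv_0_lt_compat, exp_pos. }
  assert (Heq : C * v ^ m * / ((v / INR N) ^ N) * v = C * INR N ^ N / v).
  { rewrite HvN. field. repeat split; lra. }
  assert (Hfin : C * INR N ^ N / v < eps).
  { assert (C * INR N ^ N / v <= C * INR N ^ N * h).
    { rewrite Hvh. unfold Rdiv. lra. }
    assert (C * INR N ^ N * h <= K * h) by (apply Rmult_le_compat_r; unfold K; lra).
    assert (K * h < K * (eps / K)) by (apply Rmult_lt_compat_l; auto).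
    replace (K * (eps / K)) with eps in H1 by (field; lra). lra. }
  lra.
Qed.

Lemma exp_inv_poly_derivable q q' : is_poly q -> (forall u, derivable_pt_lim q u (q' u)) ->
  forall u, derivable_pt_lim (exp_inv_poly q) u (exp_inv_poly (fun v => v * v * (q v - q' v)) u).
Proof.
  intros Hq Hd u. destruct (Rtotal_order 0 u) as [Hpos | [H0 | Hneg]].
  - apply derivable_pt_lim_loc with (f := fun w => q (/ w) * exp (- / w)).
    { exists u. split; auto. intros w Hw. unfold exp_inv_poly. destruct (Rlt_dec 0 w); auto.
      exfalso. apply Rabs_def2 in Hw. lra. }
    assert (Hinv : derivable_pt_lim (fun w => / w) u (- (/ u * / u))).
    { pose proof (derivable_pt_lim_div (fun _ => 1) (fun w => w) u 0 1 (derivable_pt_lim_const 1 u)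
        (derivable_pt_lim_id u) ltac:(lra)) as H.
      eapply derivable_pt_lim_eq.
      - eapply derivable_pt_lim_ext; [|exact H]. intros w. unfold div_fct. cbv beta.
        unfold Rdiv; ring.
      - unfold Rsqr. field. lra. }
    assert (H1 : derivable_pt_lim (fun w => q (/ w)) u (q' (/ u) * - (/ u * / u))).
    { apply (derivable_pt_lim_comp (fun w => / w) q u). auto. apply Hd. }
    assert (H2 : derivable_pt_lim (fun w => exp (- / w)) u (exp (- / u) * (/ u * / u))).
    { eapply derivable_pt_lim_eq.
      - apply (derivable_pt_lim_comp (fun w => - / w) exp u).
        + apply (derivable_pt_lim_opp (fun w => / w)). exact Hinv.
        + apply derivable_pt_lim_exp.
      - ring. }
    eapply derivable_pt_lim_eq.
    + apply (derivable_pt_lim_mult (fun w => q (/ w)) (fun w => exp (- / w))); [exact H1| exact H2].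
    + unfold exp_inv_poly. destruct (Rlt_dec 0 u); [|lra]. ring.
  - subst u. replace (exp_inv_poly (fun v => v * v * (q v - q' v)) 0) with 0
      by (unfold exp_inv_poly; destruct (Rlt_dec 0 0); lra).
    intros eps Heps. destruct (exp_inv_poly_lim0 q Hq eps Heps) as [d [Hd0 Hd1]].
    exists (mkposreal d Hd0). intros h Hh0 Hhd. simpl in Hhd.
    unfold exp_inv_poly. destruct (Rlt_dec 0 0); [lra|]. rewrite Rplus_0_l.
    destruct (Rlt_dec 0 h).
    + replace ((q (/ h) * exp (- / h) - 0) / h - 0) with (q (/ h) * exp (- / h) / h) by (field; auto).
      apply Hd1; auto. apply Rabs_def2 in Hhd. lra.
    + replace ((0 - 0) / h - 0) with 0 by (field; auto). rewrite Rabs_R0; auto.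
  - apply derivable_pt_lim_loc with (f := fun _ => 0).
    { exists (- u). split; [lra|]. intros w Hw. unfold exp_inv_poly. destruct (Rlt_dec 0 w); auto.
      apply Rabs_def2 in Hw. lra. }
    replace (exp_inv_poly (fun v => v * v * (q v - q' v)) u) with 0
      by (unfold exp_inv_poly; destruct (Rlt_dec 0 u); lra).
    apply derivable_pt_lim_const.
Qed.

Lemma exp_inv_poly_Cn k : forall q, is_poly q -> Cn k (exp_inv_poly q).
Proof.
  induction k; intros q Hq; simpl; auto.
  destruct (is_poly_derivable q Hq) as [q' [Hq' Hdq]].
  exists (exp_inv_poly (fun v => v * v * (q v - q' v))). split.
  - apply exp_inv_poly_derivable; auto.
  - apply IHk. eapply is_poly_ext; [|apply (poly_mul _ _ (poly_mul _ _ poly_id poly_id) (poly_add _ _ Hq (poly_mul _ _ (poly_const (-1)) Hq')))].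
    intros; simpl; ring.
Qed.

Definition flat_exp := exp_inv_poly (fun _ => 1).
Definition flat_exp' := exp_inv_poly (fun v => v * v).

Lemma flat_exp_derivable u : derivable_pt_lim flat_exp u (flat_exp' u).
Proof.
  eapply derivable_pt_lim_eq.
  - apply (exp_inv_poly_derivable (fun _ => 1) (fun _ => 0));
      [apply poly_const | intros; apply derivable_pt_lim_const].
  - unfold flat_exp', exp_inv_poly. destruct (Rlt_dec 0 u); ring.
Qed.

Lemma flat_exp_Cinf : Cinf flat_exp.
Proof. intros k. apply exp_inv_poly_Cn. apply poly_const. Qed.

Lemma flat_exp_nonneg u : 0 <= flat_exp u.
Proof. unfold flat_exp, exp_inv_poly. destruct (Rlt_dec 0 u); [|lra]. pose proof (exp_pos (- / u)). lra. Qed.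
Lemma flat_exp_pos u : 0 < u -> 0 < flat_exp u.
Proof. intros. unfold flat_exp, exp_inv_poly. destruct (Rlt_dec 0 u); [|lra]. pose proof (exp_pos (- / u)). lra. Qed.
Lemma flat_exp_0 u : u <= 0 -> flat_exp u = 0.
Proof. intros. unfold flat_exp, exp_inv_poly. destruct (Rlt_dec 0 u); lra. Qed.
Lemma flat_exp'_nonneg u : 0 <= flat_exp' u.
Proof.
  unfold flat_exp', exp_inv_poly. destruct (Rlt_dec 0 u); [|lra]. pose proof (exp_pos (- / u)).
  assert (0 < / u) by (apply Rinv_0_lt_compat; auto).
  apply Rmult_le_pos; [apply Rmult_le_pos|]; lra.
Qed.
Lemma flat_exp'_0 u : u <= 0 -> flat_exp' u = 0.
Proof. intros. unfold flat_exp', exp_inv_poly. destruct (Rlt_dec 0 u); lra. Qed.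

Definition step_denom u := flat_exp u + flat_exp (1 - u).
Lemma step_denom_pos u : 0 < step_denom u.
Proof.
  unfold step_denom. destruct (Rlt_dec 0 u).
  - pose proof (flat_exp_pos u r). pose proof (flat_exp_nonneg (1 - u)). lra.
  - pose proof (flat_exp_pos (1 - u) ltac:(lra)). pose proof (flat_exp_nonneg u). lra.
Qed.

Definition smooth_step u := flat_exp u / step_denom u.
Definition smooth_step' u := (flat_exp' u * flat_exp (1 - u) + flat_exp u * flat_exp' (1 - u)) / (step_denom u * step_denom u).

Lemma flat_exp_reflect_derivable u : derivable_pt_lim (fun w => flat_exp (1 - w)) u (- flat_exp' (1 - u)).
Proof.
  eapply derivable_pt_lim_eq.
  - eapply derivable_pt_lim_ext; [|apply (derivable_pt_lim_comp (fun w => -1 * w + 1) flat_exp u (-1))].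
    + intros w. unfold comp. f_equal. ring.
    + apply derivable_pt_lim_affine.
    + replace (-1 * u + 1) with (1 - u) by ring. apply flat_exp_derivable.
  - ring.
Qed.

Lemma smooth_step_derivable u : derivable_pt_lim smooth_step u (smooth_step' u).
Proof.
  pose proof (step_denom_pos u) as HD.
  eapply derivable_pt_lim_eq.
  - apply (derivable_pt_lim_div flat_exp step_denom u (flat_exp' u) (flat_exp' u + - flat_exp' (1 - u))).
    + apply flat_exp_derivable.
    + apply (derivable_pt_lim_plus flat_exp (fun w => flat_exp (1 - w))); [apply flat_exp_derivable| apply flat_exp_reflect_derivable].
    + lra.
  - unfold smooth_step', Rsqr. f_equal. unfold step_denom. ring.
Qed.

Lemma smooth_step_Cinf : Cinf smooth_step.
Proof.
  intros k. unfold smooth_step, Rdiv. apply Cn_mult; [apply flat_exp_Cinf|].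
  apply Cn_inv; [|intros t; pose proof (step_denom_pos t); lra].
  unfold step_denom. apply Cn_plus; [apply flat_exp_Cinf|].
  apply (Cn_ext k (fun t => flat_exp (-1 * t + 1))); [intros; f_equal; ring|].
  apply Cn_affine. apply flat_exp_Cinf.
Qed.

Lemma smooth_step'_nonneg u : 0 <= smooth_step' u.
Proof.
  unfold smooth_step'. pose proof (step_denom_pos u).
  apply Rmult_le_pos; [|left; apply Rinv_0_lt_compat; nra].
  pose proof (flat_exp_nonneg u). pose proof (flat_exp_nonneg (1-u)). pose proof (flat_exp'_nonneg u). pose proof (flat_exp'_nonneg (1-u)).
  apply Rplus_le_le_0_compat; apply Rmult_le_pos; auto.
Qed.

Lemma smooth_step'_out u : u <= 0 \/ 1 <= u -> smooth_step' u = 0.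
Proof.
  intros [H|H]; unfold smooth_step'.
  - rewrite (flat_exp_0 u H), (flat_exp'_0 u H). unfold Rdiv. ring.
  - rewrite (flat_exp_0 (1 - u)), (flat_exp'_0 (1 - u)) by lra. unfold Rdiv. ring.
Qed.

Lemma smooth_step_le0 u : u <= 0 -> smooth_step u = 0.
Proof. intros. unfold smooth_step. rewrite flat_exp_0 by auto. unfold Rdiv; ring. Qed.

Lemma smooth_step_ge1 u : 1 <= u -> smooth_step u = 1.
Proof.
  intros. unfold smooth_step, step_denom. rewrite (flat_exp_0 (1 - u)) by lra.
  pose proof (flat_exp_pos u ltac:(lra)). field. lra.
Qed.

Lemma smooth_step'_continuous u : continuity_pt smooth_step' u.
Proof.
  destruct (smooth_step_Cinf 2%nat) as [f' [Hf' [f'' [Hf'' _]]]].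
  assert (E : f' = smooth_step').
  { apply functional_extensionality; intro w. eapply uniqueness_limite; [apply Hf'| apply smooth_step_derivable]. }
  rewrite <- E. eapply derivable_pt_lim_continuity_pt. apply Hf''.
Qed.

Definition bump s0 d s := / d * smooth_step' ((s - s0) / d).

Lemma smooth_step_affine_derivable s0 d s : 0 < d ->
  derivable_pt_lim (fun u => smooth_step ((u - s0) / d)) s (bump s0 d s).
Proof.
  intros Hd. eapply derivable_pt_lim_eq.
  - eapply derivable_pt_lim_ext; [|apply (derivable_pt_lim_comp (fun u => / d * u + - s0 / d) smooth_step s (/ d))].
    + intros u. unfold comp. cbv beta. f_equal. field. lra.
    + apply derivable_pt_lim_affine.
    + apply smooth_step_derivable.
  - unfold bump. replace (/ d * s + - s0 / d) with ((s - s0) / d) by (field; lra). ring.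
Qed.

Lemma bump_continuous s0 d s : 0 < d -> continuity_pt (bump s0 d) s.
Proof.
  intros Hd. unfold bump.
  apply (continuity_pt_mult (fun _ => / d) (fun u => smooth_step' ((u - s0) / d))).
  - apply continuity_pt_const. intros x y; auto.
  - apply (continuity_pt_comp (fun u => (u - s0) / d) smooth_step').
    + eapply derivable_pt_lim_continuity_pt. eapply derivable_pt_lim_ext; [|apply (derivable_pt_lim_affine (/ d) (- s0 / d) s)].
      intros u. cbv beta. field. lra.
    + apply smooth_step'_continuous.
Qed.

Lemma bump_nonneg s0 d s : 0 < d -> 0 <= bump s0 d s.
Proof. intros. unfold bump. apply Rmult_le_pos; [left; apply Rinv_0_lt_compat; auto| apply smooth_step'_nonneg]. Qed.

Lemma bump_out s0 d s : 0 < d -> (s <= s0 \/ s0 + d <= s) -> bump s0 d s = 0.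
Proof.
  intros Hd Hs. unfold bump. rewrite smooth_step'_out; [ring|].
  destruct Hs as [H|H].
  - left. unfold Rdiv. apply Rmult_le_0_r; [lra| left; apply Rinv_0_lt_compat; auto].
  - right. apply (Rmult_le_reg_r d); [auto|]. unfold Rdiv. rewrite Rmult_assoc, Rinv_l; lra.
Qed.

(** * The du Bois-Reymond lemma *)

Section DuBoisReymond.
Variables a b : R.
Hypothesis Hab : a < b.
Variable C : R -> R.
Hypothesis HC : forall s, a <= s <= b -> continuity_pt C s.

Lemma bump_RInt s0 d : 0 < d -> a <= s0 -> s0 + d <= b -> RInt (bump s0 d) a b = 1.
Proof.
  intros Hd Ha Hb.
  rewrite (is_RInt_unique (bump s0 d) a b (minus (smooth_step ((b - s0) / d)) (smooth_step ((a - s0) / d)))).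
  - unfold minus, plus, opp; simpl. rewrite smooth_step_ge1, smooth_step_le0.
    + ring.
    + unfold Rdiv. apply Rmult_le_0_r; [lra| left; apply Rinv_0_lt_compat; auto].
    + apply (Rmult_le_reg_r d); [auto|]. unfold Rdiv. rewrite Rmult_assoc, Rinv_l; lra.
  - apply (is_RInt_derive (V := R_CompleteNormedModule) (fun u => smooth_step ((u - s0) / d))).
    + intros z Hz. apply is_derive_Reals. apply smooth_step_affine_derivable; auto.
    + intros z Hz. apply continuity_pt_filterlim. apply bump_continuous; auto.
Qed.

Lemma ex_RInt_mult_bump s0 d : 0 < d -> ex_RInt (fun s => C s * bump s0 d s) a b.
Proof.
  intros Hd. apply ex_RInt_continuity_pt; [lra|]. intros s Hs.
  apply (continuity_pt_mult C (bump s0 d)); [apply HC; auto| apply bump_continuous; auto].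
Qed.

Lemma RInt_mult_bump_close s0 d eps : 0 < d -> a <= s0 -> s0 + d <= b ->
  (forall s, s0 <= s <= s0 + d -> Rabs (C s - C s0) <= eps) ->
  Rabs (RInt (fun s => C s * bump s0 d s) a b - C s0) <= eps.
Proof.
  intros Hd Ha Hb Heps.
  assert (Hk : ex_RInt (bump s0 d) a b) by (apply ex_RInt_continuity_pt; [lra| intros; apply bump_continuous; auto]).
  assert (E : RInt (fun s => C s * bump s0 d s) a b - C s0 =
              RInt (fun s => (C s - C s0) * bump s0 d s) a b).
  { rewrite (RInt_ext_R (fun s => (C s - C s0) * bump s0 d s) (fun s => C s * bump s0 d s - C s0 * bump s0 d s))
      by (intros; ring).
    rewrite RInt_minus_R; [| apply ex_RInt_mult_bump; auto| apply ex_RInt_scal_R; auto].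
    rewrite RInt_scal_R by auto. rewrite bump_RInt; auto. ring. }
  rewrite E.
  assert (Hg : ex_RInt (fun s => (C s - C s0) * bump s0 d s) a b).
  { apply ex_RInt_continuity_pt; [lra|]. intros s Hs.
    apply (continuity_pt_mult (fun s => C s - C s0) (bump s0 d)); [|apply bump_continuous; auto].
    apply (continuity_pt_minus C (fun _ => C s0)); [apply HC; auto| apply continuity_pt_const; intros x y; auto]. }
  eapply Rle_trans; [apply abs_RInt_le; [lra| auto]|].
  eapply Rle_trans.
  - apply (RInt_le (fun s => Rabs ((C s - C s0) * bump s0 d s)) (fun s => eps * bump s0 d s) a b); [lra| | |].
    + apply (ex_RInt_norm (fun s => (C s - C s0) * bump s0 d s)); auto.
    + apply ex_RInt_scal_R; auto.
    + intros s Hs. rewrite Rabs_mult, (Rabs_right (bump s0 d s)) by (apply Rle_ge, bump_nonneg; auto).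
      destruct (Rle_dec s s0) as [H1|H1].
      * rewrite bump_out by (auto; lra). lra.
      * destruct (Rle_dec (s0 + d) s) as [H2|H2].
        -- rewrite bump_out by (auto; lra). lra.
        -- apply Rmult_le_compat_r; [apply bump_nonneg; auto| apply Heps; lra].
  - rewrite RInt_scal_R by auto. rewrite bump_RInt; auto. lra.
Qed.

Hypothesis Horth : forall s1 s2 d, 0 < d -> a < s1 -> s1 + d < s2 -> s2 + d < b ->
  RInt (fun s => C s * (bump s1 d s - bump s2 d s)) a b = 0.

Lemma du_bois_reymond_interior s1 s2 : a < s1 -> s1 < s2 -> s2 < b -> C s1 = C s2.
Proof.
  intros H1 H12 H2.
  apply Rminus_diag_uniq, Rabs_le_all_eps_0. intros eps Heps.
  destruct (continuity_pt_eps C s1 (HC s1 ltac:(lra)) (eps / 2) ltac:(lra)) as [d1 [Hd1 Hc1]].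
  destruct (continuity_pt_eps C s2 (HC s2 ltac:(lra)) (eps / 2) ltac:(lra)) as [d2 [Hd2 Hc2]].
  set (d := Rmin (Rmin (d1 / 2) (d2 / 2)) (Rmin ((s2 - s1) / 2) ((b - s2) / 2))).
  assert (Hd : 0 < d) by (unfold d; repeat apply Rmin_pos; lra).
  assert (Hda : d <= d1 / 2) by (unfold d; eapply Rle_trans; apply Rmin_l).
  assert (Hdb : d <= d2 / 2) by (unfold d; eapply Rle_trans; [apply Rmin_l | apply Rmin_r]).
  assert (Hdc : d <= (s2 - s1) / 2) by (unfold d; eapply Rle_trans; [apply Rmin_r | apply Rmin_l]).
  assert (Hdd : d <= (b - s2) / 2) by (unfold d; eapply Rle_trans; [apply Rmin_r | apply Rmin_r]).
  assert (B1 : Rabs (RInt (fun s => C s * bump s1 d s) a b - C s1) <= eps / 2).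
  { apply RInt_mult_bump_close; try lra. intros s Hs. left. apply Hc1, Rabs_def1; lra. }
  assert (B2 : Rabs (RInt (fun s => C s * bump s2 d s) a b - C s2) <= eps / 2).
  { apply RInt_mult_bump_close; try lra. intros s Hs. left. apply Hc2, Rabs_def1; lra. }
  assert (E : RInt (fun s => C s * bump s1 d s) a b = RInt (fun s => C s * bump s2 d s) a b).
  { apply Rminus_diag_uniq. rewrite <- RInt_minus_R by (apply ex_RInt_mult_bump; auto).
    rewrite <- (Horth s1 s2 d) by lra. apply RInt_ext_R. intros; ring. }
  rewrite E, Rabs_minus_sym in B1.
  replace (C s1 - C s2) with ((C s1 - RInt (fun s => C s * bump s2 d s) a b)
     + (RInt (fun s => C s * bump s2 d s) a b - C s2)) by ring.
  eapply Rle_trans; [apply Rabs_triang | lra].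
Qed.

Lemma du_bois_reymond s : a <= s <= b -> C s = C a.
Proof.
  set (m := (a + b) / 2).
  assert (Hin : forall s, a < s < b -> C s = C m).
  { intros s' Hs'. destruct (Rtotal_order s' m) as [Hl | [He | Hg]].
    - apply du_bois_reymond_interior; unfold m in *; lra.
    - subst; auto.
    - symmetry. apply du_bois_reymond_interior; unfold m in *; lra. }
  assert (Hend : forall e, (e = a \/ e = b) -> C e = C m).
  { intros e He. apply continuity_pt_adherent_eq; [apply HC; destruct He; lra |].
    intros d Hd. set (h := Rmin (d / 2) ((b - a) / 4)).
    assert (0 < h) by (apply Rmin_pos; lra).
    assert (h <= d / 2) by apply Rmin_l. assert (h <= (b - a) / 4) by apply Rmin_r.
    destruct He as [-> | ->]; [exists (a + h) | exists (b - h)];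
      (split; [apply Rabs_def1 | apply Hin]; unfold m; lra). }
  intros Hs. rewrite (Hend a) by auto.
  destruct (Rle_lt_or_eq_dec a s (proj1 Hs)) as [Has | <-]; [| apply Hend; auto].
  destruct (Rle_lt_or_eq_dec s b (proj2 Hs)) as [Hsb | ->]; [apply Hin; lra | apply Hend; auto].
Qed.
End DuBoisReymond.

(** * Biharmonic curves *)

Definition coord_variation (k : nat) (sigma : R -> R) : R -> nat -> R :=
  fun s i => if Nat.eqb i k then sigma s else 0.

Lemma coord_variation_smooth n k sigma : Cinf sigma -> smooth_curve n (coord_variation k sigma).
Proof.
  intros Hs i Hi. unfold coord_variation. apply Cinf_smooth1.
  destruct (Nat.eqb i k); [exact Hs | intros m; apply Cn_const].
Qed.

Lemma vel_coord_variation k sigma dsigma s i : (forall u, derivable_pt_lim sigma u (dsigma u)) ->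
  vel (coord_variation k sigma) s i = if Nat.eqb i k then dsigma s else 0.
Proof.
  intros Hd. unfold vel, coord_variation. destruct (Nat.eqb i k); apply deriv_lim; auto.
  apply derivable_pt_lim_const.
Qed.

Definition plateau s1 s2 d s := smooth_step ((s - s1) / d) - smooth_step ((s - s2) / d).

Lemma plateau_Cinf s1 s2 d : 0 < d -> Cinf (plateau s1 s2 d).
Proof.
  intros Hd k. unfold plateau.
  apply (Cn_ext k (fun s => smooth_step (/ d * s + - s1 / d) + -1 * smooth_step (/ d * s + - s2 / d))).
  { intros t. replace (/ d * t + - s1 / d) with ((t - s1) / d) by (field; lra).
    replace (/ d * t + - s2 / d) with ((t - s2) / d) by (field; lra). ring. }
  apply Cn_plus; [apply Cn_affine, smooth_step_Cinf |].
  apply Cn_mult; [apply Cn_const | apply Cn_affine, smooth_step_Cinf].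
Qed.

Lemma plateau_derivable s1 s2 d s : 0 < d ->
  derivable_pt_lim (plateau s1 s2 d) s (bump s1 d s - bump s2 d s).
Proof.
  intros Hd.
  apply (derivable_pt_lim_minus (fun u => smooth_step ((u - s1) / d)) (fun u => smooth_step ((u - s2) / d)));
    apply smooth_step_affine_derivable; auto.
Qed.

Lemma plateau_out s1 s2 d s : 0 < d -> s1 <= s2 -> (s <= s1 \/ s2 + d <= s) -> plateau s1 s2 d s = 0.
Proof.
  intros Hd H12 [Hs | Hs]; unfold plateau.
  - rewrite !smooth_step_le0; [ring | |]; unfold Rdiv;
      apply Rmult_le_0_r; try lra; left; apply Rinv_0_lt_compat; lra.
  - rewrite !smooth_step_ge1; [ring | |];
      apply (Rmult_le_reg_r d); auto; unfold Rdiv; rewrite Rmult_assoc, Rinv_l; lra.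
Qed.

Section Biharmonic.
Variables (n : nat) (F : (nat -> R) -> R) (a b : R) (x : R -> nat -> R).
Hypotheses (HM : Minkowski n F) (Hab : a < b) (Hx : smooth_curve n x) (Hus : unit_speed n F a b x).

Lemma first_variation_formula V : smooth_curve n V ->
  (forall i, (i < n)%nat -> vel V a i = 0 /\ vel V b i = 0) ->
  derivable_pt_lim (fun t => E2 n F a b (fun s i => x s i + t * V s i)) 0
    (- RInt (fun s => rsum n (fun k => euler_lagrange n F x s k * vel V s k)) a b).
Proof.
  intros HV Hend. eapply derivable_pt_lim_eq; [apply (first_variation n F a b); auto |].
  apply (first_variation_by_parts n F a b); auto.
Qed.

Lemma euler_lagrange_const k s : biharmonic n F a b x -> (k < n)%nat -> a <= s <= b ->
  euler_lagrange n F x s k = euler_lagrange n F x a k.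
Proof.
  intros Hbi Hk. apply (du_bois_reymond a b Hab (fun u => euler_lagrange n F x u k)).
  - intros u Hu. apply (euler_lagrange_continuous n); auto.
    apply (unit_speed_vel_nonzero n F a b); auto.
  - intros s1 s2 d Hd H1 H12 H2.
    set (V := coord_variation k (plateau s1 s2 d)).
    assert (HvelV : forall u i, vel V u i = if Nat.eqb i k then bump s1 d u - bump s2 d u else 0).
    { intros. apply (vel_coord_variation k _ (fun u => bump s1 d u - bump s2 d u)).
      intros; apply plateau_derivable; auto. }
    assert (Hend : forall u, (u <= s1 \/ s2 + d <= u) -> forall i, V u i = 0 /\ vel V u i = 0).
    { intros u Hu i. rewrite HvelV. unfold V, coord_variation.
      destruct (Nat.eqb i k); [| auto]. rewrite plateau_out, !bump_out by (auto; lra). lra. }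
    assert (HV : smooth_curve n V) by (apply coord_variation_smooth, plateau_Cinf; auto).
    pose proof (first_variation_formula V HV
      ltac:(intros; split; apply Hend; lra)) as Hfirst.
    pose proof (Hbi V HV ltac:(intros i Hi; pose proof (Hend a ltac:(lra) i);
                                 pose proof (Hend b ltac:(lra) i); unfold vel in *; tauto)) as H0.
    pose proof (uniqueness_limite _ _ _ _ H0 Hfirst) as Hint.
    transitivity (- - RInt (fun s => rsum n (fun i => euler_lagrange n F x s i * vel V s i)) a b);
      [rewrite Ropp_involutive | rewrite <- Hint; apply Ropp_0].
    apply RInt_ext_R. intros u _.
    rewrite (rsum_ext n _ (fun i => (if Nat.eqb i k then bump s1 d u - bump s2 d u else 0)
      * euler_lagrange n F x u i)) by (intros; rewrite HvelV; ring).
    rewrite rsum_indicator by auto. ring.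
Qed.

Lemma biharmonic_of_euler_lagrange_const (lam : nat -> R) :
  (forall s k, a <= s <= b -> (k < n)%nat -> euler_lagrange n F x s k = lam k) ->
  biharmonic n F a b x.
Proof.
  intros Hlam V HV Hend.
  eapply derivable_pt_lim_eq; [apply first_variation_formula; auto; intros i Hi; apply Hend; auto |].
  rewrite (RInt_ext_R _ (fun s => rsum n (fun k => lam k * vel V s k))).
  - rewrite (RInt_derivable_pt_lim (fun s => rsum n (fun k => lam k * V s k))); [| lra | |].
    + rewrite <- rsum_minus, (rsum_ext n _ (fun _ => 0)), rsum_0; [ring |].
      intros k Hk. destruct (Hend k Hk) as [-> [-> _]]. ring.
    + intros s Hs. apply derivable_pt_lim_rsum. intros k Hk.
      apply (derivable_pt_lim_scal (fun s => V s k)), (curve_derivable n); auto.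
    + intros s Hs. apply continuity_pt_rsum. intros k Hk.
      apply (continuity_pt_scal (fun s => vel V s k)), (vel_continuous n); auto.
  - rewrite Rmin_left, Rmax_right by lra. intros s Hs.
    apply rsum_ext. intros k Hk. rewrite Hlam; auto; lra.
Qed.

End Biharmonic.

Theorem mainTheorem7 (n : nat) (F : (nat -> R) -> R) (a b : R) (x : R -> nat -> R) :
  (0 < n)%nat -> Minkowski n F -> a < b ->
  smooth_curve n x -> unit_speed n F a b x ->
  (biharmonic n F a b x <->
   exists lam : nat -> R, forall s, a <= s <= b -> forall i, (i < n)%nat ->
     rsum n (fun j => gten n F i j (vel x s) * Dtau n F x s j) = lam i).
Proof.
  intros _ HM Hab Hx Hus.
  assert (Hel : forall s k, a <= s <= b -> (k < n)%nat ->
    rsum n (fun j => gten n F k j (vel x s) * Dtau n F x s j) = euler_lagrange n F x s k).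
  { intros s k Hs Hk. apply gDtau_euler_lagrange; auto. apply (unit_speed_vel_nonzero n F a b); auto. }
  split.
  - intros Hbi. exists (fun k => euler_lagrange n F x a k). intros s Hs k Hk.
    rewrite Hel by auto. apply (euler_lagrange_const n F a b); auto.
  - intros [lam Hlam]. apply (biharmonic_of_euler_lagrange_const n F a b x HM Hab Hx Hus lam).
    intros s k Hs Hk. rewrite <- Hel; auto.
Qed.
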